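(* Let $\alpha<\beta$ and let $S=S(\alpha,\beta;\infty)=\{z\in\mathbb{C}:z\ne0,\ \alpha<\arg z<\beta\}$. Let $f$ be holomorphic in $S$ and continuous on $\overline{S}$, and suppose there are $M,C,\lambda>0$ with $|f(z)|\le M$ for every $z\in S$ and $|f(z)|\le C/|z|^{\lambda}$ for every $z\neq 0$ with $\arg z=\alpha$. Then for every $z\in\overline{S}\setminus\{0\}$, $$|f(z)|\le K\Big(\frac{C}{|z|^{\lambda}}\Big)^{\frac{\beta-\theta}{\beta-\alpha}},$$ where $\theta=\arg z\in[\alpha,\beta]$ and $K=\max\{1,M\}$. *)

From Stdlib Require Import Reals.
From Coquelicot Require Import Coquelicot.
Open Scope R_scope.

Definition has_arg (z : C) (theta : R) : Prop :=
  z = (Cmod z * cos theta, Cmod z * sin theta)%R.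

Definition sector (alpha beta : R) (z : C) : Prop :=
  z <> 0%C /\ exists theta, alpha < theta < beta /\ has_arg z theta.

Definition sector_closure (alpha beta : R) (z : C) : Prop :=
  z = 0%C \/ exists theta, alpha <= theta <= beta /\ has_arg z theta.

Definition holo_at (f : C -> C) (z : C) : Prop :=
  @ex_derive C_AbsRing C_NormedModule f z.

Definition cont_on_at (D : C -> Prop) (f : C -> C) (z : C) : Prop :=
  filterlim f (within D (locally z)) (locally (f z)).

From Stdlib Require Import Reals Lra Lia Psatz IndefiniteDescription Classical.
From Coquelicot Require Import Coquelicot.
Open Scope R_scope.

(* Via w |-> e^w the closed sector becomes the strip alpha <= Im w <= beta, and g := f o exp is
   bounded by M there and by exp (ln C - lambda x) on the lower edge. Let K = max 1 M and
   t = (beta - y) / (beta - alpha). The holomorphic weight exp Q_eps, with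
   Re Q_eps (x + iy) = -(t (ln C - lambda x) + ln K) - eps (x^2 - y^2), makes |g exp Q_eps| at most
   exp (eps (alpha^2 + beta^2)) on the horizontal edges, and also on vertical edges far enough
   out, where the Gaussian factor wins. By the maximum modulus principle on such rectangles the
   bound holds at every point of the strip; letting eps -> 0 gives |g| <= K exp (t (ln C - lambda x)),
   which is the claim.
   The maximum modulus principle is obtained from Goursat's theorem: Cauchy's formula on a
   rectangle applied to H^n gives |H(z0)|^n |W| <= (perimeter / d) m^n, where W, the contour
   integral of 1/(w - z0), is nonzero; letting n grow gives |H(z0)| <= m. *)

(** * Integrals of complex-valued functions *)

Notation C_R := C_R_CompleteNormedModule.

Definition CInt (f : R -> C) (a b : R) : C := @RInt C_R f a b.
Definition ex_CInt (f : R -> C) (a b : R) : Prop := @ex_RInt C_R f a b.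

Lemma is_RInt_C_fst (f : R -> C) a b l :
  @is_RInt C_R f a b l -> is_RInt (fun t => fst (f t)) a b (fst l).
Proof. exact (@is_RInt_fct_extend_fst R_NormedModule R_NormedModule f a b l). Qed.

Lemma is_RInt_C_snd (f : R -> C) a b l :
  @is_RInt C_R f a b l -> is_RInt (fun t => snd (f t)) a b (snd l).
Proof. exact (@is_RInt_fct_extend_snd R_NormedModule R_NormedModule f a b l). Qed.

Lemma is_RInt_C_pair (f : R -> C) a b l1 l2 :
  is_RInt (fun t => fst (f t)) a b l1 -> is_RInt (fun t => snd (f t)) a b l2 ->
  @is_RInt C_R f a b (l1, l2).
Proof. exact (@is_RInt_fct_extend_pair R_NormedModule R_NormedModule f a b l1 l2). Qed.

Lemma CInt_correct f a b : ex_CInt f a b -> @is_RInt C_R f a b (CInt f a b).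
Proof. exact (@RInt_correct C_R f a b). Qed.

Lemma CInt_unique f a b l : @is_RInt C_R f a b l -> CInt f a b = l.
Proof. exact (@is_RInt_unique C_R f a b l). Qed.

Lemma CInt_fst f a b : ex_CInt f a b -> fst (CInt f a b) = RInt (fun t => fst (f t)) a b.
Proof. intros H. symmetry. apply is_RInt_unique, is_RInt_C_fst, CInt_correct, H. Qed.

Lemma CInt_snd f a b : ex_CInt f a b -> snd (CInt f a b) = RInt (fun t => snd (f t)) a b.
Proof. intros H. symmetry. apply is_RInt_unique, is_RInt_C_snd, CInt_correct, H. Qed.

Lemma norm_C_R (z : C) : @norm R_AbsRing C_R z = Cmod z.
Proof.
  destruct z as [x y]. unfold norm; simpl. unfold prod_norm, Cmod; simpl. unfold abs; simpl.
  f_equal. rewrite !Rmult_1_r, <- !Rabs_mult, !Rabs_right by nra. reflexivity.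
Qed.

Lemma is_RInt_Cplus (f g : R -> C) a b l m : @is_RInt C_R f a b l -> @is_RInt C_R g a b m ->
  @is_RInt C_R (fun t => f t + g t)%C a b (l + m)%C.
Proof. exact (@is_RInt_plus C_R f g a b l m). Qed.

Lemma is_RInt_Cmult (f : R -> C) a b l c : @is_RInt C_R f a b l ->
  @is_RInt C_R (fun t => c * f t)%C a b (c * l)%C.
Proof.
  intros Hf. destruct l as [l1 l2], c as [c1 c2].
  pose proof (is_RInt_C_fst _ _ _ _ Hf) as H1. pose proof (is_RInt_C_snd _ _ _ _ Hf) as H2.
  simpl in H1, H2. apply is_RInt_C_pair; simpl.
  - apply (is_RInt_minus (V := R_CompleteNormedModule));
      apply (is_RInt_scal (V := R_CompleteNormedModule)); assumption.
  - apply (is_RInt_plus (V := R_CompleteNormedModule));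
      apply (is_RInt_scal (V := R_CompleteNormedModule)); assumption.
Qed.

Lemma CInt_plus f g a b : ex_CInt f a b -> ex_CInt g a b ->
  CInt (fun t => f t + g t)%C a b = (CInt f a b + CInt g a b)%C.
Proof. intros Hf Hg. apply CInt_unique, is_RInt_Cplus; apply CInt_correct; assumption. Qed.

Lemma CInt_mult f a b c : ex_CInt f a b -> CInt (fun t => c * f t)%C a b = (c * CInt f a b)%C.
Proof. intros Hf. apply CInt_unique, is_RInt_Cmult, CInt_correct, Hf. Qed.

Lemma CInt_ext f g a b : (forall t, Rmin a b <= t <= Rmax a b -> f t = g t) ->
  CInt f a b = CInt g a b.
Proof. intros H. apply (@RInt_ext C_R). intros t Ht. apply H. lra. Qed.

Lemma CInt_Chasles f a b c : ex_CInt f a b -> ex_CInt f b c ->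
  (CInt f a b + CInt f b c)%C = CInt f a c.
Proof. exact (@RInt_Chasles C_R f a b c). Qed.

Lemma CInt_const (c : C) a b : CInt (fun _ => c) a b = ((b - a) * c)%C.
Proof.
  unfold CInt. rewrite RInt_const. unfold scal; simpl. unfold prod_scal, scal; simpl.
  unfold mult; simpl. unfold Cmult; simpl. f_equal; ring.
Qed.

Lemma ex_CInt_continuous (f : R -> C) a b :
  (forall t, Rmin a b <= t <= Rmax a b -> continuous f t) -> ex_CInt f a b.
Proof. exact (@ex_RInt_continuous C_R f a b). Qed.

Lemma CInt_norm_le f a b B : a <= b -> ex_CInt f a b ->
  (forall t, a <= t <= b -> Cmod (f t) <= B) -> Cmod (CInt f a b) <= (b - a) * B.
Proof.
  intros Hab Hf HB. rewrite <- norm_C_R.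
  apply (@norm_RInt_le_const C_R f a b); [exact Hab | | apply CInt_correct, Hf].
  intros t Ht. rewrite norm_C_R. apply HB, Ht.
Qed.

(** * Contour integrals over rectangles *)

Lemma locally_C_box (z : C) (P : C -> Prop) :
  locally z P <-> exists eps : posreal, forall w : C,
    Rabs (fst w - fst z) < eps -> Rabs (snd w - snd z) < eps -> P w.
Proof.
  split.
  - intros [eps H]. exists eps. intros w H1 H2. apply H. split; assumption.
  - intros [eps H]. exists eps. intros w [H1 H2]. apply H; assumption.
Qed.

Lemma holo_at_continuous (G : C -> C) z : holo_at G z -> continuous G z.
Proof. intros H P HP. apply locally_C, (ex_derive_continuous G z H), HP. Qed.

Lemma continuous_along_re (G : C -> C) x y :
  continuous G (x, y) -> continuous (fun s => G (s, y)) x.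
Proof.
  intros H. apply (continuous_comp (fun s => (s, y)) G); [|exact H].
  intros P HP. apply locally_C_box in HP as [eps HP].
  exists eps. intros s Hs. apply HP; simpl; [exact Hs|].
  rewrite Rminus_eq_0, Rabs_R0. apply cond_pos.
Qed.

Lemma continuous_along_im (G : C -> C) x y :
  continuous G (x, y) -> continuous (fun s => G (x, s)) y.
Proof.
  intros H. apply (continuous_comp (fun s => (x, s)) G); [|exact H].
  intros P HP. apply locally_C_box in HP as [eps HP].
  exists eps. intros s Hs. apply HP; simpl; [|exact Hs].
  rewrite Rminus_eq_0, Rabs_R0. apply cond_pos.
Qed.

Lemma ex_CInt_along_re (G : C -> C) y a b : a <= b ->
  (forall x, a <= x <= b -> continuous G (x, y)) -> ex_CInt (fun x => G (x, y)) a b.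
Proof.
  intros Hab H. apply ex_CInt_continuous. intros t Ht.
  rewrite Rmin_left, Rmax_right in Ht by lra. apply continuous_along_re, H, Ht.
Qed.

Lemma ex_CInt_along_im (G : C -> C) x a b : a <= b ->
  (forall y, a <= y <= b -> continuous G (x, y)) -> ex_CInt (fun y => G (x, y)) a b.
Proof.
  intros Hab H. apply ex_CInt_continuous. intros t Ht.
  rewrite Rmin_left, Rmax_right in Ht by lra. apply continuous_along_im, H, Ht.
Qed.

(* Counterclockwise contour integral over the boundary of [x1, x2] x [y1, y2]; dz = i dy on the
   vertical sides. *)
Definition rect_integral (G : C -> C) (x1 x2 y1 y2 : R) : C :=
  (CInt (fun x => G (x, y1)) x1 x2 + Ci * CInt (fun y => G (x2, y)) y1 y2
   - CInt (fun x => G (x, y2)) x1 x2 - Ci * CInt (fun y => G (x1, y)) y1 y2)%C.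

Definition rect_boundary_continuous (G : C -> C) (x1 x2 y1 y2 : R) : Prop :=
  (forall x, x1 <= x <= x2 -> continuous G (x, y1) /\ continuous G (x, y2)) /\
  (forall y, y1 <= y <= y2 -> continuous G (x1, y) /\ continuous G (x2, y)).

Lemma rect_boundary_continuous_of_rect (G : C -> C) x1 x2 y1 y2 : x1 <= x2 -> y1 <= y2 ->
  (forall x y, x1 <= x <= x2 -> y1 <= y <= y2 -> continuous G (x, y)) ->
  rect_boundary_continuous G x1 x2 y1 y2.
Proof. intros Hx Hy H. split; intros t Ht; split; apply H; lra. Qed.

Lemma rect_boundary_ex_CInt (G : C -> C) x1 x2 y1 y2 : x1 <= x2 -> y1 <= y2 ->
  rect_boundary_continuous G x1 x2 y1 y2 ->
  ex_CInt (fun x => G (x, y1)) x1 x2 /\ ex_CInt (fun x => G (x, y2)) x1 x2 /\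
  ex_CInt (fun y => G (x1, y)) y1 y2 /\ ex_CInt (fun y => G (x2, y)) y1 y2.
Proof.
  intros Hx Hy [H1 H2]. split; [|split; [|split]].
  - apply ex_CInt_along_re; [exact Hx|]. intros t Ht. exact (proj1 (H1 t Ht)).
  - apply ex_CInt_along_re; [exact Hx|]. intros t Ht. exact (proj2 (H1 t Ht)).
  - apply ex_CInt_along_im; [exact Hy|]. intros t Ht. exact (proj1 (H2 t Ht)).
  - apply ex_CInt_along_im; [exact Hy|]. intros t Ht. exact (proj2 (H2 t Ht)).
Qed.

Lemma rect_integral_ext (G : C -> C) G' x1 x2 y1 y2 : (forall z, G z = G' z) ->
  rect_integral G x1 x2 y1 y2 = rect_integral G' x1 x2 y1 y2.
Proof.
  intros H. unfold rect_integral.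
  rewrite (CInt_ext (fun x => G (x, y1)) (fun x => G' (x, y1))),
    (CInt_ext (fun x => G (x, y2)) (fun x => G' (x, y2))),
    (CInt_ext (fun y => G (x1, y)) (fun y => G' (x1, y))),
    (CInt_ext (fun y => G (x2, y)) (fun y => G' (x2, y))) by (intros; apply H).
  reflexivity.
Qed.

Lemma rect_integral_plus (G1 G2 : C -> C) x1 x2 y1 y2 : x1 <= x2 -> y1 <= y2 ->
  rect_boundary_continuous G1 x1 x2 y1 y2 -> rect_boundary_continuous G2 x1 x2 y1 y2 ->
  rect_integral (fun z => G1 z + G2 z)%C x1 x2 y1 y2 =
  (rect_integral G1 x1 x2 y1 y2 + rect_integral G2 x1 x2 y1 y2)%C.
Proof.
  intros Hx Hy HG1 HG2. unfold rect_integral.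
  destruct (rect_boundary_ex_CInt _ _ _ _ _ Hx Hy HG1) as (a1 & a2 & a3 & a4).
  destruct (rect_boundary_ex_CInt _ _ _ _ _ Hx Hy HG2) as (b1 & b2 & b3 & b4).
  rewrite (CInt_plus _ _ _ _ a1 b1), (CInt_plus _ _ _ _ a2 b2),
    (CInt_plus _ _ _ _ a3 b3), (CInt_plus _ _ _ _ a4 b4).
  ring.
Qed.

Lemma rect_integral_scal (G : C -> C) c x1 x2 y1 y2 : x1 <= x2 -> y1 <= y2 ->
  rect_boundary_continuous G x1 x2 y1 y2 ->
  rect_integral (fun z => c * G z)%C x1 x2 y1 y2 = (c * rect_integral G x1 x2 y1 y2)%C.
Proof.
  intros Hx Hy HG. unfold rect_integral.
  destruct (rect_boundary_ex_CInt _ _ _ _ _ Hx Hy HG) as (a1 & a2 & a3 & a4).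
  rewrite (CInt_mult _ _ _ c a1), (CInt_mult _ _ _ c a2), (CInt_mult _ _ _ c a3),
    (CInt_mult _ _ _ c a4).
  ring.
Qed.

Lemma rect_integral_split_re (G : C -> C) x1 xm x2 y1 y2 : x1 <= xm <= x2 -> y1 <= y2 ->
  rect_boundary_continuous G x1 xm y1 y2 -> rect_boundary_continuous G xm x2 y1 y2 ->
  rect_integral G x1 x2 y1 y2 = (rect_integral G x1 xm y1 y2 + rect_integral G xm x2 y1 y2)%C.
Proof.
  intros Hx Hy HG1 HG2. unfold rect_integral.
  destruct (rect_boundary_ex_CInt G x1 xm y1 y2 ltac:(lra) Hy HG1) as (a1 & a2 & _).
  destruct (rect_boundary_ex_CInt G xm x2 y1 y2 ltac:(lra) Hy HG2) as (b1 & b2 & _).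
  rewrite <- (CInt_Chasles _ _ _ _ a1 b1), <- (CInt_Chasles _ _ _ _ a2 b2).
  ring.
Qed.

Lemma rect_integral_split_im (G : C -> C) x1 x2 y1 ym y2 : x1 <= x2 -> y1 <= ym <= y2 ->
  rect_boundary_continuous G x1 x2 y1 ym -> rect_boundary_continuous G x1 x2 ym y2 ->
  rect_integral G x1 x2 y1 y2 = (rect_integral G x1 x2 y1 ym + rect_integral G x1 x2 ym y2)%C.
Proof.
  intros Hx Hy HG1 HG2. unfold rect_integral.
  destruct (rect_boundary_ex_CInt G x1 x2 y1 ym Hx ltac:(lra) HG1) as (_ & _ & a3 & a4).
  destruct (rect_boundary_ex_CInt G x1 x2 ym y2 Hx ltac:(lra) HG2) as (_ & _ & b3 & b4).
  rewrite <- (CInt_Chasles _ _ _ _ a3 b3), <- (CInt_Chasles _ _ _ _ a4 b4).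
  ring.
Qed.

Lemma rect_integral_norm_le (G : C -> C) x1 x2 y1 y2 B : x1 <= x2 -> y1 <= y2 ->
  rect_boundary_continuous G x1 x2 y1 y2 ->
  (forall x, x1 <= x <= x2 -> Cmod (G (x, y1)) <= B /\ Cmod (G (x, y2)) <= B) ->
  (forall y, y1 <= y <= y2 -> Cmod (G (x1, y)) <= B /\ Cmod (G (x2, y)) <= B) ->
  Cmod (rect_integral G x1 x2 y1 y2) <= 2 * ((x2 - x1) + (y2 - y1)) * B.
Proof.
  intros Hx Hy HG HB1 HB2. unfold rect_integral.
  destruct (rect_boundary_ex_CInt _ _ _ _ _ Hx Hy HG) as (a1 & a2 & a3 & a4).
  pose proof (CInt_norm_le _ _ _ B Hx a1 (fun t Ht => proj1 (HB1 t Ht))).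
  pose proof (CInt_norm_le _ _ _ B Hx a2 (fun t Ht => proj2 (HB1 t Ht))).
  pose proof (CInt_norm_le _ _ _ B Hy a3 (fun t Ht => proj1 (HB2 t Ht))).
  pose proof (CInt_norm_le _ _ _ B Hy a4 (fun t Ht => proj2 (HB2 t Ht))).
  unfold Cminus.
  eapply Rle_trans; [apply Cmod_triangle|]. eapply Rle_trans; [apply Rplus_le_compat_r, Cmod_triangle|].
  eapply Rle_trans; [apply Rplus_le_compat_r, Rplus_le_compat_r, Cmod_triangle|].
  rewrite !Cmod_opp, !Cmod_mult, !Cmod_Ci. lra.
Qed.

Lemma is_RInt_id a b : is_RInt (fun t => t) a b ((b * b - a * a) / 2).
Proof.
  apply (is_RInt_ext (fun t => pow t 1)); [intros; simpl; ring|].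
  replace ((b * b - a * a) / 2) with (pow b 2 / INR 2 - pow a 2 / INR 2) by (simpl; field).
  apply is_RInt_pow.
Qed.

Lemma is_RInt_Rconst (c : R) a b : is_RInt (fun _ => c) a b ((b - a) * c).
Proof. exact (is_RInt_const (V := R_CompleteNormedModule) a b c). Qed.

Lemma CInt_affine_re (a b : C) y x1 x2 :
  CInt (fun x => a + b * (x, y))%C x1 x2 =
  ((x2 - x1) * a + b * (((x2 * x2 - x1 * x1) / 2)%R, ((x2 - x1) * y)%R))%C.
Proof.
  apply CInt_unique, is_RInt_Cplus.
  - rewrite <- CInt_const. apply CInt_correct, ex_CInt_continuous. intros; apply continuous_const.
  - apply is_RInt_Cmult, is_RInt_C_pair; [apply is_RInt_id | apply is_RInt_Rconst].
Qed.

Lemma CInt_affine_im (a b : C) x y1 y2 :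
  CInt (fun y => a + b * (x, y))%C y1 y2 =
  ((y2 - y1) * a + b * (((y2 - y1) * x)%R, ((y2 * y2 - y1 * y1) / 2)%R))%C.
Proof.
  apply CInt_unique, is_RInt_Cplus.
  - rewrite <- CInt_const. apply CInt_correct, ex_CInt_continuous. intros; apply continuous_const.
  - apply is_RInt_Cmult, is_RInt_C_pair; [apply is_RInt_Rconst | apply is_RInt_id].
Qed.

Lemma rect_integral_affine (a b : C) x1 x2 y1 y2 :
  rect_integral (fun z => a + b * z)%C x1 x2 y1 y2 = 0%C.
Proof.
  unfold rect_integral. rewrite !CInt_affine_re, !CInt_affine_im.
  destruct a as [a1 a2], b as [b1 b2].
  unfold Ci, RtoC, Cminus, Cplus, Cmult, Copp, Cplus; simpl. f_equal; field.
Qed.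

(* Coquelicot states the product and chain rules for [AbsRing_NormedModule C_AbsRing],
   which is not convertible to [C_NormedModule]. *)
Lemma is_derive_C_AbsRing (f : C -> C) z l :
  @is_derive C_AbsRing C_NormedModule f z l <->
  @is_derive C_AbsRing (AbsRing_NormedModule C_AbsRing) f z l.
Proof.
  split; intros [[Hp Hs [M HM]] Hd]; (split; [split; [exact Hp | exact Hs | exists M; exact HM] |]);
    intros x Hx eps; exact (Hd x Hx eps).
Qed.

Lemma holo_at_const c z : holo_at (fun _ => c) z.
Proof. exact (@ex_derive_const C_AbsRing C_NormedModule c z). Qed.

Lemma holo_at_id z : holo_at (fun w => w) z.
Proof. eexists. apply is_derive_C_AbsRing, (@is_derive_id C_AbsRing). Qed.

Lemma holo_at_plus f g z : holo_at f z -> holo_at g z -> holo_at (fun w => f w + g w)%C z.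
Proof. exact (@ex_derive_plus C_AbsRing C_NormedModule f g z). Qed.

Lemma holo_at_opp f z : holo_at f z -> holo_at (fun w => - f w)%C z.
Proof. exact (@ex_derive_opp C_AbsRing C_NormedModule f z). Qed.

Lemma holo_at_minus f g z : holo_at f z -> holo_at g z -> holo_at (fun w => f w - g w)%C z.
Proof. intros Hf Hg. apply holo_at_plus, holo_at_opp; assumption. Qed.

Lemma holo_at_mult f g z : holo_at f z -> holo_at g z -> holo_at (fun w => f w * g w)%C z.
Proof.
  intros [l1 H1] [l2 H2]. eexists. apply is_derive_C_AbsRing.
  apply (@is_derive_mult C_AbsRing); [apply is_derive_C_AbsRing, H1 | apply is_derive_C_AbsRing, H2 |].
  exact Cmult_comm.
Qed.

Lemma holo_at_pow f z n : holo_at f z -> holo_at (fun w => Cpow (f w) n) z.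
Proof.
  intros Hf. induction n as [|n IH]; simpl; [apply holo_at_const | apply holo_at_mult; assumption].
Qed.

Lemma holo_at_comp f g z : holo_at f (g z) -> holo_at g z -> holo_at (fun w => f (g w)) z.
Proof.
  intros [l1 H1] [l2 H2]. eexists.
  apply (@is_derive_comp C_AbsRing C_NormedModule f g z l1 l2 H1), is_derive_C_AbsRing, H2.
Qed.

Lemma is_derive_C_approx (G : C -> C) z l : @is_derive C_AbsRing C_NormedModule G z l ->
  forall eps : posreal, exists del : posreal, forall w : C,
    Rabs (fst w - fst z) < del -> Rabs (snd w - snd z) < del ->
    Cmod (G w - G z - (w - z) * l)%C <= eps * Cmod (w - z)%C.
Proof.
  intros [_ H] eps.
  specialize (H z (fun P HP => HP) eps).
  apply locally_C, locally_C_box in H as [del Hd].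
  exists del. exact Hd.
Qed.

Lemma Cmod_le_abs_fst_snd (z : C) : Cmod z <= Rabs (fst z) + Rabs (snd z).
Proof.
  destruct z as [a b]. unfold Cmod; simpl. pose proof (Rabs_pos a). pose proof (Rabs_pos b).
  apply Rsqr_incr_0_var; [|lra].
  rewrite Rsqr_sqrt by nra.
  replace (a * (a * 1) + b * (b * 1)) with (a² + b²) by (unfold Rsqr; ring).
  rewrite (Rsqr_abs a), (Rsqr_abs b). unfold Rsqr. nra.
Qed.

(** * Goursat's theorem *)

Lemma eq0_of_Cmod_le_small (c : C) m K : 0 < m ->
  (forall eps, 0 < eps < m -> Cmod c <= eps * K) -> c = 0%C.
Proof.
  intros Hm H. apply Cmod_eq_0, Rle_antisym; [|apply Cmod_ge_0].
  apply Rnot_lt_le. intros Hc.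
  assert (HK : 0 < K) by (specialize (H (m / 2) ltac:(lra)); nra).
  set (eps := Rmin (m / 2) (Cmod c / (2 * K))).
  assert (He1 : 0 < eps) by (apply Rmin_pos; [lra | apply Rdiv_lt_0_compat; lra]).
  assert (He2 : eps <= m / 2) by apply Rmin_l.
  assert (He3 : eps * (2 * K) <= Cmod c).
  { pose proof (Rmin_r (m / 2) (Cmod c / (2 * K))). fold eps in H0.
    apply (Rmult_le_compat_r (2 * K)) in H0; [|lra].
    unfold Rdiv in H0. rewrite Rmult_assoc, Rinv_l, Rmult_1_r in H0 by lra. exact H0. }
  specialize (H eps ltac:(lra)). nra.
Qed.

Lemma nested_intervals (a b : nat -> R) : (forall n, a n <= a (S n)) ->
  (forall n, b (S n) <= b n) -> (forall n, a n <= b n) -> exists l, forall n, a n <= l <= b n.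
Proof.
  intros Ha Hb Hab.
  assert (Bm : forall m n, (m <= n)%nat -> b n <= b m).
  { intros m n Hmn. induction Hmn; [lra | specialize (Hb m0); lra]. }
  assert (Hg : Un_growing a) by exact Ha.
  assert (Hu : has_ub a).
  { exists (b 0%nat). intros x [i ->]. specialize (Bm 0%nat i ltac:(lia)). specialize (Hab i). lra. }
  destruct (growing_cv a Hg Hu) as [l Hl].
  exists l. intros n. split; [apply (growing_ineq a l Hg Hl)|].
  apply Rnot_lt_le. intros Hlt.
  destruct (Hl (l - b n)) as [N HN]; [lra|].
  specialize (HN (max N n) ltac:(lia)). unfold Rdist in HN.
  specialize (Bm n (max N n) ltac:(lia)). specialize (Hab (max N n)).
  rewrite Rabs_left1 in HN by lra. lra.
Qed.

Lemma exists_pow2_inv_lt (c d : R) : 0 < d -> exists n : nat, c / 2 ^ n < d.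
Proof.
  intros Hd.
  destruct (pow_lt_1_zero (/ 2) ltac:(rewrite Rabs_right; lra) (d / (Rabs c + 1)))
    as [N HN]; [apply Rdiv_lt_0_compat; [lra | pose proof (Rabs_pos c); lra]|].
  exists N. specialize (HN N (le_n N)).
  assert (Hq : 0 < (/ 2) ^ N) by (apply pow_lt; lra).
  rewrite Rabs_right in HN by lra.
  assert (Hc : 0 <= Rabs c) by apply Rabs_pos.
  apply (Rmult_lt_compat_l (Rabs c + 1)) in HN; [|lra].
  replace ((Rabs c + 1) * (d / (Rabs c + 1))) with d in HN by (field; lra).
  unfold Rdiv. rewrite <- pow_inv. pose proof (Rle_abs c). nra.
Qed.

Lemma rect_integral_le_linear_error (G : C -> C) z l eps x1 x2 y1 y2 :
  x1 <= x2 -> y1 <= y2 ->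
  (forall x y, x1 <= x <= x2 -> y1 <= y <= y2 -> continuous G (x, y)) ->
  (forall x y, x1 <= x <= x2 -> y1 <= y <= y2 ->
     Cmod (G (x, y) - G z - ((x, y) - z) * l)%C <= eps) ->
  Cmod (rect_integral G x1 x2 y1 y2) <= 2 * ((x2 - x1) + (y2 - y1)) * eps.
Proof.
  intros Hx Hy HG Herr.
  set (a := (G z - z * l)%C).
  set (phi := fun w => (G w - (a + l * w))%C).
  assert (Haff : forall w, continuous (fun w => a + l * w)%C w).
  { intros w. apply holo_at_continuous, holo_at_plus, holo_at_mult;
      [apply holo_at_const | apply holo_at_const | apply holo_at_id]. }
  assert (Hphi : rect_boundary_continuous phi x1 x2 y1 y2).
  { apply rect_boundary_continuous_of_rect; [exact Hx | exact Hy|]. intros x y hx hy.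
    apply (continuous_plus (V := C_NormedModule)); [apply HG; assumption|].
    apply (continuous_opp (V := C_NormedModule)), Haff. }
  rewrite (rect_integral_ext G (fun w => phi w + (a + l * w))%C) by (intros; unfold phi; ring).
  rewrite rect_integral_plus, rect_integral_affine, Cplus_0_r; [| exact Hx | exact Hy | exact Hphi |].
  - assert (Hb : forall x y, x1 <= x <= x2 -> y1 <= y <= y2 -> Cmod (phi (x, y)) <= eps).
    { intros x y hx hy. unfold phi, a.
      replace (G (x, y) - _)%C with (G (x, y) - G z - ((x, y) - z) * l)%C by ring.
      apply Herr; assumption. }
    apply rect_integral_norm_le; [exact Hx | exact Hy | exact Hphi | intros x hx | intros y hy];
      split; apply Hb; lra.
  - apply rect_boundary_continuous_of_rect; [exact Hx | exact Hy|]. intros; apply Haff.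
Qed.

Record rect := Rect { rx1 : R; rx2 : R; ry1 : R; ry2 : R }.

Definition rect_integral_of (G : C -> C) (r : rect) : C :=
  rect_integral G (rx1 r) (rx2 r) (ry1 r) (ry2 r).

Definition rect_continuous (G : C -> C) (r : rect) : Prop :=
  forall x y, rx1 r <= x <= rx2 r -> ry1 r <= y <= ry2 r -> continuous G (x, y).

Definition mid_re (r : rect) : R := (rx1 r + rx2 r) / 2.
Definition mid_im (r : rect) : R := (ry1 r + ry2 r) / 2.

Definition quarter_sw (r : rect) : rect := Rect (rx1 r) (mid_re r) (ry1 r) (mid_im r).
Definition quarter_se (r : rect) : rect := Rect (mid_re r) (rx2 r) (ry1 r) (mid_im r).
Definition quarter_nw (r : rect) : rect := Rect (rx1 r) (mid_re r) (mid_im r) (ry2 r).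
Definition quarter_ne (r : rect) : rect := Rect (mid_re r) (rx2 r) (mid_im r) (ry2 r).

Definition quadrisect (G : C -> C) (r : rect) : rect :=
  if Rle_dec (Cmod (rect_integral_of G r) / 4) (Cmod (rect_integral_of G (quarter_sw r)))
  then quarter_sw r else
  if Rle_dec (Cmod (rect_integral_of G r) / 4) (Cmod (rect_integral_of G (quarter_se r)))
  then quarter_se r else
  if Rle_dec (Cmod (rect_integral_of G r) / 4) (Cmod (rect_integral_of G (quarter_nw r)))
  then quarter_nw r else quarter_ne r.

Lemma rect_integral_quarters G r : rx1 r <= rx2 r -> ry1 r <= ry2 r -> rect_continuous G r ->
  rect_integral_of G r =
  (rect_integral_of G (quarter_sw r) + rect_integral_of G (quarter_se r)
   + rect_integral_of G (quarter_nw r) + rect_integral_of G (quarter_ne r))%C.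
Proof.
  destruct r as [a b c d]. unfold rect_continuous, rect_integral_of, quarter_sw, quarter_se,
    quarter_nw, quarter_ne, mid_re, mid_im; simpl. intros Hx Hy H.
  assert (Hsub : forall u1 u2 v1 v2, a <= u1 <= u2 -> u2 <= b -> c <= v1 <= v2 -> v2 <= d ->
    rect_boundary_continuous G u1 u2 v1 v2).
  { intros. apply rect_boundary_continuous_of_rect; try lra. intros; apply H; lra. }
  rewrite (rect_integral_split_re G a ((a + b) / 2) b c d),
    (rect_integral_split_im G a ((a + b) / 2) c ((c + d) / 2) d),
    (rect_integral_split_im G ((a + b) / 2) b c ((c + d) / 2) d) by (try apply Hsub; lra).
  ring.
Qed.

Lemma quadrisect_cases G r : quadrisect G r = quarter_sw r \/ quadrisect G r = quarter_se r \/
  quadrisect G r = quarter_nw r \/ quadrisect G r = quarter_ne r.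
Proof. unfold quadrisect. repeat (case Rle_dec; intros _); auto. Qed.

Lemma quadrisect_geom G r : rx1 r <= rx2 r -> ry1 r <= ry2 r ->
  let s := quadrisect G r in
  rx1 r <= rx1 s /\ rx1 s <= rx2 s /\ rx2 s <= rx2 r /\ rx2 s - rx1 s = (rx2 r - rx1 r) / 2 /\
  ry1 r <= ry1 s /\ ry1 s <= ry2 s /\ ry2 s <= ry2 r /\ ry2 s - ry1 s = (ry2 r - ry1 r) / 2.
Proof.
  intros Hx Hy s. destruct (quadrisect_cases G r) as [E|[E|[E|E]]]; unfold s; rewrite E;
    unfold quarter_sw, quarter_se, quarter_nw, quarter_ne, mid_re, mid_im; simpl; repeat split; lra.
Qed.

Lemma quadrisect_integral G r : rx1 r <= rx2 r -> ry1 r <= ry2 r -> rect_continuous G r ->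
  Cmod (rect_integral_of G r) <= 4 * Cmod (rect_integral_of G (quadrisect G r)).
Proof.
  intros Hx Hy H. pose proof (rect_integral_quarters G r Hx Hy H) as E.
  unfold quadrisect.
  case Rle_dec; intros h1; [lra|]. case Rle_dec; intros h2; [lra|].
  case Rle_dec; intros h3; [lra|].
  assert (Cmod (rect_integral_of G r) <= Cmod (rect_integral_of G (quarter_sw r))
    + Cmod (rect_integral_of G (quarter_se r)) + Cmod (rect_integral_of G (quarter_nw r))
    + Cmod (rect_integral_of G (quarter_ne r))).
  { rewrite E. eapply Rle_trans; [apply Cmod_triangle|]. apply Rplus_le_compat_r.
    eapply Rle_trans; [apply Cmod_triangle|]. apply Rplus_le_compat_r. apply Cmod_triangle. }
  lra.
Qed.

Definition nested_rect (G : C -> C) (r0 : rect) (n : nat) : rect := Nat.iter n (quadrisect G) r0.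

Lemma nested_rect_geom G r0 n : rx1 r0 <= rx2 r0 -> ry1 r0 <= ry2 r0 ->
  let s := nested_rect G r0 n in
  rx1 r0 <= rx1 s /\ rx1 s <= rx2 s /\ rx2 s <= rx2 r0 /\ rx2 s - rx1 s = (rx2 r0 - rx1 r0) / 2 ^ n /\
  ry1 r0 <= ry1 s /\ ry1 s <= ry2 s /\ ry2 s <= ry2 r0 /\ ry2 s - ry1 s = (ry2 r0 - ry1 r0) / 2 ^ n.
Proof.
  intros Hx Hy. induction n as [|n IH]; simpl; [unfold nested_rect; simpl; repeat split; lra|].
  destruct IH as (h1 & h2 & h3 & h4 & h5 & h6 & h7 & h8).
  change (nested_rect G r0 (S n)) with (quadrisect G (nested_rect G r0 n)).
  destruct (quadrisect_geom G (nested_rect G r0 n) h2 h6) as (k1 & k2 & k3 & k4 & k5 & k6 & k7 & k8).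
  assert (0 < 2 ^ n) by (apply pow_lt; lra).
  repeat split; try lra; [rewrite k4, h4 | rewrite k8, h8]; field; lra.
Qed.

Lemma nested_rect_mono G r0 n : rx1 r0 <= rx2 r0 -> ry1 r0 <= ry2 r0 ->
  rx1 (nested_rect G r0 n) <= rx1 (nested_rect G r0 (S n)) /\
  rx2 (nested_rect G r0 (S n)) <= rx2 (nested_rect G r0 n) /\
  ry1 (nested_rect G r0 n) <= ry1 (nested_rect G r0 (S n)) /\
  ry2 (nested_rect G r0 (S n)) <= ry2 (nested_rect G r0 n).
Proof.
  intros Hx Hy. destruct (nested_rect_geom G r0 n Hx Hy) as (_ & h2 & _ & _ & _ & h6 & _).
  change (nested_rect G r0 (S n)) with (quadrisect G (nested_rect G r0 n)).
  pose proof (quadrisect_geom G (nested_rect G r0 n) h2 h6). simpl in *. lra.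
Qed.

Lemma nested_rect_integral G r0 n : rx1 r0 <= rx2 r0 -> ry1 r0 <= ry2 r0 -> rect_continuous G r0 ->
  Cmod (rect_integral_of G r0) <= 4 ^ n * Cmod (rect_integral_of G (nested_rect G r0 n)).
Proof.
  intros Hx Hy H. induction n as [|n IH]; [simpl; unfold nested_rect; simpl; lra|].
  destruct (nested_rect_geom G r0 n Hx Hy) as (h1 & h2 & h3 & _ & h5 & h6 & h7 & _).
  assert (Hc : rect_continuous G (nested_rect G r0 n)) by (intros x y ? ?; apply H; lra).
  pose proof (quadrisect_integral G _ h2 h6 Hc).
  change (nested_rect G r0 (S n)) with (quadrisect G (nested_rect G r0 n)). simpl.
  assert (0 < 4 ^ n) by (apply pow_lt; lra). nra.
Qed.

Lemma nested_rect_point G r0 : rx1 r0 <= rx2 r0 -> ry1 r0 <= ry2 r0 ->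
  exists x y, forall n, rx1 (nested_rect G r0 n) <= x <= rx2 (nested_rect G r0 n) /\
                        ry1 (nested_rect G r0 n) <= y <= ry2 (nested_rect G r0 n).
Proof.
  intros Hx Hy.
  destruct (nested_intervals (fun n => rx1 (nested_rect G r0 n)) (fun n => rx2 (nested_rect G r0 n)))
    as [x Hxs]; try (intros n; apply (nested_rect_mono G r0 n Hx Hy));
    [intros n; apply (nested_rect_geom G r0 n Hx Hy)|].
  destruct (nested_intervals (fun n => ry1 (nested_rect G r0 n)) (fun n => ry2 (nested_rect G r0 n)))
    as [y Hys]; try (intros n; apply (nested_rect_mono G r0 n Hx Hy));
    [intros n; apply (nested_rect_geom G r0 n Hx Hy)|].
  exists x, y. intros n. split; [apply Hxs | apply Hys].
Qed.

Theorem rect_integral_holo_eq0 (G : C -> C) x1 x2 y1 y2 : x1 <= x2 -> y1 <= y2 ->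
  (forall x y, x1 <= x <= x2 -> y1 <= y <= y2 -> holo_at G (x, y)) ->
  rect_integral G x1 x2 y1 y2 = 0%C.
Proof.
  intros Hx Hy Hd.
  set (r0 := Rect x1 x2 y1 y2).
  assert (Hc : rect_continuous G r0) by (intros x y hx hy; apply holo_at_continuous, Hd; assumption).
  destruct (nested_rect_point G r0 Hx Hy) as (xs & ys & Hs).
  assert (Hin : x1 <= xs <= x2 /\ y1 <= ys <= y2).
  { destruct (Hs 0%nat) as [h1 h2]. unfold nested_rect in h1, h2; simpl in h1, h2. lra. }
  destruct (Hd xs ys (proj1 Hin) (proj2 Hin)) as [l Hl].
  set (W := (x2 - x1) + (y2 - y1)).
  apply (eq0_of_Cmod_le_small _ 1 (2 * (W * W))); [lra|]. intros eps Heps.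
  destruct (is_derive_C_approx G (xs, ys) l Hl (mkposreal eps (proj1 Heps))) as [del Hdel].
  destruct (exists_pow2_inv_lt W del (cond_pos del)) as [n Hn].
  destruct (nested_rect_geom G r0 n Hx Hy) as (h1 & h2 & h3 & h4 & h5 & h6 & h7 & h8).
  set (s := nested_rect G r0 n) in *. simpl in h1, h3, h4, h5, h7, h8.
  destruct (Hs n) as [Hxs Hys]. fold s in Hxs, Hys.
  assert (P2 : 0 < 2 ^ n) by (apply pow_lt; lra).
  assert (Hside : (rx2 s - rx1 s) + (ry2 s - ry1 s) = W / 2 ^ n)
    by (rewrite h4, h8; unfold W; field; lra).
  assert (Hsmall : Cmod (rect_integral_of G s) <= 2 * (W / 2 ^ n) * (eps * (W / 2 ^ n))).
  { unfold rect_integral_of. rewrite <- Hside at 1.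
    apply (rect_integral_le_linear_error G (xs, ys) l); [exact h2 | exact h6 | |].
    - intros x y hx hy. apply Hc; simpl; lra.
    - intros x y hx hy. eapply Rle_trans; [apply Hdel; simpl; apply Rabs_def1; lra|].
      simpl. apply Rmult_le_compat_l; [lra|]. rewrite <- Hside.
      eapply Rle_trans; [apply Cmod_le_abs_fst_snd|]. simpl.
      assert (Rabs (x + - xs) <= rx2 s - rx1 s) by (apply Rabs_le; lra).
      assert (Rabs (y + - ys) <= ry2 s - ry1 s) by (apply Rabs_le; lra). lra. }
  pose proof (nested_rect_integral G r0 n Hx Hy Hc) as Hr. fold s in Hr.
  unfold rect_integral_of in Hr at 1. simpl in Hr.
  assert (E4 : 4 ^ n = 2 ^ n * 2 ^ n) by (rewrite <- Rpow_mult_distr; f_equal; ring).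
  eapply Rle_trans; [exact Hr|]. rewrite E4.
  eapply Rle_trans; [apply Rmult_le_compat_l; [nra | exact Hsmall]|].
  right. field. lra.
Qed.

Lemma exists_margin x1 x2 y1 y2 a b c : x1 < a < x2 -> y1 < b < y2 -> 0 < c ->
  exists d, 0 < d /\ d < c /\ d < a - x1 /\ d < x2 - a /\ d < b - y1 /\ d < y2 - b.
Proof.
  intros Ha Hb Hc.
  pose proof (Rmin_l (Rmin c (Rmin (a - x1) (x2 - a))) (Rmin (b - y1) (y2 - b))).
  pose proof (Rmin_r (Rmin c (Rmin (a - x1) (x2 - a))) (Rmin (b - y1) (y2 - b))).
  pose proof (Rmin_l c (Rmin (a - x1) (x2 - a))). pose proof (Rmin_r c (Rmin (a - x1) (x2 - a))).
  pose proof (Rmin_l (a - x1) (x2 - a)). pose proof (Rmin_r (a - x1) (x2 - a)).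
  pose proof (Rmin_l (b - y1) (y2 - b)). pose proof (Rmin_r (b - y1) (y2 - b)).
  set (m := Rmin (Rmin c (Rmin (a - x1) (x2 - a))) (Rmin (b - y1) (y2 - b))) in *.
  assert (Hm : 0 < m) by (unfold m; repeat apply Rmin_pos; lra).
  exists (m / 2). repeat split; lra.
Qed.

Section PuncturedRectangle.

Variables (q : C -> C) (x1 x2 y1 y2 a b : R).
Hypothesis Hholo : forall x y, x1 <= x <= x2 -> y1 <= y <= y2 -> (x <> a \/ y <> b) ->
  holo_at q (x, y).

Lemma punctured_boundary_continuous u1 u2 v1 v2 :
  x1 <= u1 -> u1 <= u2 -> u2 <= x2 -> y1 <= v1 -> v1 <= v2 -> v2 <= y2 ->
  u1 <> a -> u2 <> a -> v1 <> b -> v2 <> b -> rect_boundary_continuous q u1 u2 v1 v2.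
Proof using Hholo.
  intros. split; intros t Ht; split; apply holo_at_continuous, Hholo; try lra; tauto.
Qed.

Lemma punctured_rect_integral_away u1 u2 v1 v2 :
  x1 <= u1 -> u1 <= u2 -> u2 <= x2 -> y1 <= v1 -> v1 <= v2 -> v2 <= y2 ->
  (u2 < a \/ a < u1 \/ v2 < b \/ b < v1) -> rect_integral q u1 u2 v1 v2 = 0%C.
Proof using Hholo.
  intros h1 h2 h3 h4 h5 h6 Hout. apply rect_integral_holo_eq0; [lra | lra|].
  intros x y hx hy. apply Hholo; [lra | lra|].
  destruct Hout as [o|[o|[o|o]]]; [left | left | right | right]; lra.
Qed.

Hypotheses (Ha : x1 < a < x2) (Hb : y1 < b < y2).

Lemma punctured_rect_integral_square s : 0 < s -> s < a - x1 -> s < x2 - a ->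
  s < b - y1 -> s < y2 - b ->
  rect_integral q x1 x2 y1 y2 = rect_integral q (a - s) (a + s) (b - s) (b + s).
Proof.
  intros hs1 hs2 hs3 hs4 hs5.
  rewrite (rect_integral_split_re q x1 (a - s) x2 y1 y2),
    (rect_integral_split_re q (a - s) (a + s) x2 y1 y2),
    (rect_integral_split_im q (a - s) (a + s) y1 (b - s) y2),
    (rect_integral_split_im q (a - s) (a + s) (b - s) (b + s) y2)
    by (try apply punctured_boundary_continuous; lra).
  rewrite (punctured_rect_integral_away x1 (a - s) y1 y2),
    (punctured_rect_integral_away (a + s) x2 y1 y2),
    (punctured_rect_integral_away (a - s) (a + s) y1 (b - s)),
    (punctured_rect_integral_away (a - s) (a + s) (b + s) y2) by lra.
  ring.
Qed.

Theorem punctured_rect_integral_eq0 rho B : 0 < rho ->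
  (forall x y, Rabs (x - a) < rho -> Rabs (y - b) < rho -> (x <> a \/ y <> b) ->
     Cmod (q (x, y)) <= B) ->
  rect_integral q x1 x2 y1 y2 = 0%C.
Proof.
  intros Hrho HB.
  destruct (exists_margin x1 x2 y1 y2 a b rho Ha Hb Hrho) as (m & Hm & Hm1 & Hm2 & Hm3 & Hm4 & Hm5).
  apply (eq0_of_Cmod_le_small _ m (8 * B) Hm). intros s [hs1 hs2].
  rewrite (punctured_rect_integral_square s) by lra.
  replace (s * (8 * B)) with (2 * (((a + s) - (a - s)) + ((b + s) - (b - s))) * B) by ring.
  apply rect_integral_norm_le; [lra | lra | apply punctured_boundary_continuous; lra | |];
    [intros x hx | intros y hy]; split; apply HB;
    try (apply Rabs_def1; lra); [right | right | left | left]; lra.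
Qed.

End PuncturedRectangle.

Lemma is_derive_C_of_quadratic_error (f : C -> C) z l K rho : 0 < rho ->
  (forall w, Cmod (w - z)%C < rho ->
     Cmod (f w - f z - (w - z) * l)%C <= K * (Cmod (w - z)%C * Cmod (w - z)%C)) ->
  @is_derive C_AbsRing C_NormedModule f z l.
Proof.
  intros Hr H. split; [apply (@is_linear_scal_l C_AbsRing C_NormedModule)|].
  intros x Hx eps.
  apply (@is_filter_lim_locally_unique C_AbsRing (AbsRing_NormedModule C_AbsRing)) in Hx. subst x.
  pose proof (Rabs_pos K). pose proof (Rle_abs K).
  assert (Hd : 0 < Rmin rho (eps / (Rabs K + 1))).
  { apply Rmin_pos; [lra | apply Rdiv_lt_0_compat; [apply cond_pos | lra]]. }
  exists (mkposreal _ Hd). intros w Hw.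
  change (Cmod (w - z)%C < Rmin rho (eps / (Rabs K + 1))) in Hw.
  change (Cmod (f w - f z - (w - z) * l)%C <= eps * Cmod (w - z)%C).
  pose proof (Rmin_l rho (eps / (Rabs K + 1))) as Hm1.
  pose proof (Rmin_r rho (eps / (Rabs K + 1))) as Hm2.
  pose proof (Cmod_ge_0 (w - z)%C).
  assert (He : (Rabs K + 1) * Cmod (w - z) <= eps).
  { assert (Hwe : Cmod (w - z) <= eps / (Rabs K + 1)) by lra.
    apply (Rmult_le_compat_l (Rabs K + 1)) in Hwe; [|lra].
    replace ((Rabs K + 1) * (eps / (Rabs K + 1))) with (pos eps) in Hwe by (field; lra). exact Hwe. }
  eapply Rle_trans; [apply H; lra|]. nra.
Qed.

Definition cauchy_kernel (z0 : C) (w : C) : C := (/ (w - z0))%C.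

Lemma holo_at_cauchy_kernel z0 z : z <> z0 -> holo_at (cauchy_kernel z0) z.
Proof.
  intros Hz. exists (- / ((z - z0) * (z - z0)))%C.
  assert (Hn : (z - z0)%C <> 0%C) by (intros E; apply Hz, Ceq_minus, E).
  set (c := Cmod (z - z0)%C). assert (Hc : 0 < c) by apply Cmod_gt_0, Hn.
  apply (is_derive_C_of_quadratic_error _ _ _ (2 / (c * c * c)) (c / 2)); [lra|].
  intros w Hw.
  assert (Hwz : c / 2 <= Cmod (w - z0)%C).
  { pose proof (Cmod_triangle (z - w)%C (w - z0)%C).
    replace (z - w + (w - z0))%C with (z - z0)%C in H by ring.
    assert (Cmod (z - w)%C = Cmod (w - z)%C) by (rewrite <- Cmod_opp; f_equal; ring).
    fold c in H. lra. }
  assert (Hwn : (w - z0)%C <> 0%C) by (intros E; rewrite E, Cmod_0 in Hwz; lra).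
  unfold cauchy_kernel.
  replace (/ (w - z0) - / (z - z0) - (w - z) * - / ((z - z0) * (z - z0)))%C
    with ((w - z) * (w - z) * / ((w - z0) * (z - z0) * (z - z0)))%C by (field; split; assumption).
  rewrite !Cmod_mult, Cmod_inv by (repeat apply Cmult_neq_0; assumption).
  rewrite !Cmod_mult. fold c.
  assert (Hi : / (Cmod (w - z0)%C * c * c) <= 2 / (c * c * c)).
  { replace (2 / (c * c * c)) with (/ (c / 2 * c * c)) by (field; lra).
    assert (0 < c * c) by nra. apply Rinv_le_contravar; nra. }
  pose proof (Cmod_ge_0 (w - z)%C). nra.
Qed.

Lemma continuous_cauchy_kernel (a b x y : R) : (x <> a \/ y <> b) ->
  continuous (cauchy_kernel (a, b)) (x, y).
Proof.
  intros H. apply holo_at_continuous, holo_at_cauchy_kernel.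
  intros E. injection E. intros; tauto.
Qed.

Lemma Cmod_cauchy_kernel_le (a b x y d : R) : 0 < d -> (d <= Rabs (x - a) \/ d <= Rabs (y - b)) ->
  Cmod (cauchy_kernel (a, b) (x, y)) <= / d.
Proof.
  intros Hd Hxy. unfold cauchy_kernel.
  assert (Hc : d <= Cmod ((x, y) - (a, b))%C).
  { pose proof (Rmax_Cmod ((x, y) - (a, b))%C) as Hm. simpl in Hm.
    pose proof (Rmax_l (Rabs (x + - a)) (Rabs (y + - b))).
    pose proof (Rmax_r (Rabs (x + - a)) (Rabs (y + - b))). unfold Rminus in Hxy. lra. }
  assert (Hn : ((x, y) - (a, b))%C <> 0%C) by (intros E; rewrite E, Cmod_0 in Hc; lra).
  rewrite Cmod_inv by exact Hn. apply Rinv_le_contravar; lra.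
Qed.

Lemma RInt_lt_0 (g : R -> R) a b : a < b ->
  (forall t, a < t < b -> g t < 0) -> (forall t, a <= t <= b -> continuous g t) -> RInt g a b < 0.
Proof.
  intros Hab Hneg Hc.
  assert (Hex : ex_RInt g a b).
  { apply (ex_RInt_continuous (V := R_CompleteNormedModule)). intros t Ht.
    apply Hc. rewrite Rmin_left, Rmax_right in Ht by lra. exact Ht. }
  assert (0 < RInt (fun t => opp (g t)) a b).
  { apply RInt_gt_0; [exact Hab | intros t Ht; specialize (Hneg t Ht); unfold opp; simpl; lra |].
    intros t Ht. apply (continuous_opp (V := R_NormedModule)), Hc, Ht. }
  rewrite (RInt_opp (V := R_CompleteNormedModule)) in H by exact Hex. unfold opp in H; simpl in H. lra.
Qed.

Lemma sum_sq_pos u v : (u <> 0 \/ v <> 0) -> 0 < u * u + v * v.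
Proof.
  intros [H|H]; [pose proof (Rsqr_pos_lt u H) | pose proof (Rsqr_pos_lt v H)]; unfold Rsqr in *; nra.
Qed.

Lemma cauchy_kernel_eq a b x y : (x <> a \/ y <> b) ->
  cauchy_kernel (a, b) (x, y) = ((x - a) / ((x - a) * (x - a) + (y - b) * (y - b)),
                                 - (y - b) / ((x - a) * (x - a) + (y - b) * (y - b))).
Proof.
  intros H. unfold cauchy_kernel, Cinv, Cminus, Cplus, Copp; simpl.
  f_equal; field; apply Rgt_not_eq, (sum_sq_pos (x - a) (y - b)); lra.
Qed.

Lemma rect_integral_cauchy_kernel_neq0 x1 x2 y1 y2 a b : x1 < a < x2 -> y1 < b < y2 ->
  rect_integral (cauchy_kernel (a, b)) x1 x2 y1 y2 <> 0%C.
Proof.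
  intros Ha Hb E.
  set (k := cauchy_kernel (a, b)).
  assert (Hc : forall x y, (x <> a \/ y <> b) -> continuous k (x, y))
    by (intros; apply continuous_cauchy_kernel; assumption).
  destruct (rect_boundary_ex_CInt k x1 x2 y1 y2 ltac:(lra) ltac:(lra))
    as (c1 & c2 & c3 & c4); [split; intros t Ht; split; apply Hc; lra|].
  assert (Hre : forall x y, x1 <= x <= x2 -> y = y1 \/ y = y2 ->
      continuous (fun t => snd (k (t, y))) x)
    by (intros x y hx hy; apply (continuous_comp (fun t => k (t, y)) snd), continuous_snd;
        apply continuous_along_re, Hc; lra).
  assert (Him : forall x y, y1 <= y <= y2 -> x = x1 \/ x = x2 ->
      continuous (fun t => fst (k (x, t))) y)
    by (intros x y hy hx; apply (continuous_comp (fun t => k (x, t)) fst), continuous_fst;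
        apply continuous_along_im, Hc; lra).
  assert (P1 : 0 < RInt (fun t => snd (k (t, y1))) x1 x2).
  { apply RInt_gt_0; [lra | | intros; apply Hre; lra].
    intros t Ht. unfold k. rewrite cauchy_kernel_eq by lra. simpl.
    apply Rdiv_lt_0_compat; [lra | apply sum_sq_pos; lra]. }
  assert (P2 : RInt (fun t => snd (k (t, y2))) x1 x2 < 0).
  { apply RInt_lt_0; [lra | | intros; apply Hre; lra].
    intros t Ht. unfold k. rewrite cauchy_kernel_eq by lra. simpl. unfold Rdiv.
    apply Rmult_neg_pos; [lra | apply Rinv_0_lt_compat, sum_sq_pos; lra]. }
  assert (P3 : 0 < RInt (fun t => fst (k (x2, t))) y1 y2).
  { apply RInt_gt_0; [lra | | intros; apply Him; lra].
    intros t Ht. unfold k. rewrite cauchy_kernel_eq by lra. simpl.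
    apply Rdiv_lt_0_compat; [lra | apply sum_sq_pos; lra]. }
  assert (P4 : RInt (fun t => fst (k (x1, t))) y1 y2 < 0).
  { apply RInt_lt_0; [lra | | intros; apply Him; lra].
    intros t Ht. unfold k. rewrite cauchy_kernel_eq by lra. simpl. unfold Rdiv.
    apply Rmult_neg_pos; [lra | apply Rinv_0_lt_compat, sum_sq_pos; lra]. }
  assert (Hsnd : forall A B C D : C,
      snd (A + Ci * B - C - Ci * D)%C = snd A + fst B - snd C - fst D)
    by (intros [] [] [] []; simpl; ring).
  apply (f_equal snd) in E. unfold rect_integral in E. rewrite Hsnd in E.
  rewrite !CInt_snd, !CInt_fst in E by assumption. fold k in E.
  change (snd (RtoC 0)) with 0 in E. lra.
Qed.

(** * Maximum modulus principle *)

Lemma le_of_pow_mult_le r m w K : 0 <= r -> 0 <= m -> 0 < w ->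
  (forall n, r ^ n * w <= K * m ^ n) -> r <= m.
Proof.
  intros Hr Hm Hw H. apply Rnot_lt_le. intros Hlt.
  destruct (Req_dec m 0) as [E|E].
  - specialize (H 1%nat). rewrite E in H. simpl in H. nra.
  - assert (Hx : Rabs (r / m) > 1).
    { rewrite Rabs_right by (apply Rle_ge, Rdiv_le_0_compat; lra).
      apply Rlt_gt, (Rmult_lt_reg_r m); [lra|].
      unfold Rdiv. rewrite Rmult_assoc, Rinv_l by lra. lra. }
    destruct (Pow_x_infinity (r / m) Hx (K / w + 1)) as [N HN].
    specialize (HN N (le_n N)). specialize (H N).
    rewrite Rabs_right in HN by (apply Rle_ge, pow_le, Rdiv_le_0_compat; lra).
    assert (HmN : 0 < m ^ N) by (apply pow_lt; lra).
    assert (Er : r ^ N = m ^ N * (r / m) ^ N) by (rewrite <- Rpow_mult_distr; f_equal; field; lra).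
    assert (Ew : (K / w + 1) * w = K + w) by (field; lra).
    rewrite Er in H.
    assert (m ^ N * (K / w + 1) * w <= m ^ N * (r / m) ^ N * w)
      by (apply Rmult_le_compat_r; [lra|]; apply Rmult_le_compat_l; lra).
    nra.
Qed.

Lemma holo_at_difference_quotient_bounded (H : C -> C) a b : holo_at H (a, b) ->
  exists rho B, 0 < rho /\ forall x y, Rabs (x - a) < rho -> Rabs (y - b) < rho ->
    (x <> a \/ y <> b) -> Cmod ((H (x, y) - H (a, b)) * cauchy_kernel (a, b) (x, y))%C <= B.
Proof.
  intros [l Hl].
  destruct (is_derive_C_approx H (a, b) l Hl (mkposreal 1 Rlt_0_1)) as [rho Hrho].
  exists rho, (Cmod l + 1). split; [apply cond_pos|].
  intros x y hx hy hne. set (h := ((x, y) - (a, b))%C).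
  assert (Hh : h <> 0%C) by (unfold h; intros E; apply Ceq_minus in E; injection E; intros; tauto).
  assert (Hp : 0 < Cmod h) by apply Cmod_gt_0, Hh.
  specialize (Hrho (x, y) hx hy). simpl in Hrho. fold h in Hrho.
  assert (T : Cmod (H (x, y) - H (a, b))%C <= Cmod h + Cmod h * Cmod l).
  { replace (H (x, y) - H (a, b))%C with ((H (x, y) - H (a, b) - h * l) + h * l)%C by ring.
    eapply Rle_trans; [apply Cmod_triangle|]. rewrite Cmod_mult. lra. }
  unfold cauchy_kernel. fold h. rewrite Cmod_mult, Cmod_inv by exact Hh.
  apply (Rmult_le_reg_r (Cmod h)); [exact Hp|].
  rewrite Rmult_assoc, Rinv_l by lra. nra.
Qed.

Lemma rect_cauchy_formula (H : C -> C) x1 x2 y1 y2 a b : x1 < a < x2 -> y1 < b < y2 ->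
  (forall x y, x1 <= x <= x2 -> y1 <= y <= y2 -> holo_at H (x, y)) ->
  rect_integral (fun w => H w * cauchy_kernel (a, b) w)%C x1 x2 y1 y2 =
  (H (a, b) * rect_integral (cauchy_kernel (a, b)) x1 x2 y1 y2)%C.
Proof.
  intros Ha Hb Hd.
  set (k := cauchy_kernel (a, b)).
  assert (Hk : forall x y, (x <> a \/ y <> b) -> holo_at k (x, y))
    by (intros x y hne; apply holo_at_cauchy_kernel; intros E; injection E; intros; tauto).
  assert (Hbc : forall g, (forall x y, x1 <= x <= x2 -> y1 <= y <= y2 -> (x <> a \/ y <> b) ->
      holo_at g (x, y)) -> rect_boundary_continuous g x1 x2 y1 y2)
    by (intros g Hg; apply (punctured_boundary_continuous g x1 x2 y1 y2 a b Hg); lra).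
  assert (Hq : rect_integral (fun w => (H w - H (a, b)) * k w)%C x1 x2 y1 y2 = 0%C).
  { destruct (holo_at_difference_quotient_bounded H a b (Hd a b ltac:(lra) ltac:(lra)))
      as (rho & B & Hrho & HB).
    apply (punctured_rect_integral_eq0 _ x1 x2 y1 y2 a b) with rho B; try assumption.
    intros x y hx hy hne.
    apply holo_at_mult; [|apply Hk, hne].
    apply holo_at_minus; [apply Hd; assumption | apply holo_at_const]. }
  rewrite (rect_integral_ext _ (fun w => H w * k w + (- H (a, b)) * k w)%C) in Hq by (intros; ring).
  rewrite rect_integral_plus, rect_integral_scal in Hq; try lra.
  - transitivity (rect_integral (fun w => H w * k w)%C x1 x2 y1 y2
      + - H (a, b) * rect_integral k x1 x2 y1 y2 + H (a, b) * rect_integral k x1 x2 y1 y2)%C;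
      [ring | rewrite Hq; ring].
  - apply Hbc. intros; apply Hk; assumption.
  - apply Hbc. intros; apply holo_at_mult; [apply Hd | apply Hk]; assumption.
  - apply Hbc. intros; apply holo_at_mult; [apply holo_at_const | apply Hk]; assumption.
Qed.

Theorem max_modulus_rect_holo (H : C -> C) x1 x2 y1 y2 a b m :
  x1 < a < x2 -> y1 < b < y2 ->
  (forall x y, x1 <= x <= x2 -> y1 <= y <= y2 -> holo_at H (x, y)) ->
  (forall x, x1 <= x <= x2 -> Cmod (H (x, y1)) <= m /\ Cmod (H (x, y2)) <= m) ->
  (forall y, y1 <= y <= y2 -> Cmod (H (x1, y)) <= m /\ Cmod (H (x2, y)) <= m) ->
  Cmod (H (a, b)) <= m.
Proof.
  intros Ha Hb Hd HB1 HB2.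
  destruct (exists_margin x1 x2 y1 y2 a b 1 Ha Hb Rlt_0_1) as (d & Hd0 & _ & Hd1 & Hd2 & Hd3 & Hd4).
  assert (Hm : 0 <= m) by (pose proof (Cmod_ge_0 (H (x1, y1))); pose proof (HB1 x1 ltac:(lra)); lra).
  set (W := rect_integral (cauchy_kernel (a, b)) x1 x2 y1 y2).
  assert (HW : 0 < Cmod W) by (apply Cmod_gt_0, rect_integral_cauchy_kernel_neq0; assumption).
  apply (le_of_pow_mult_le _ _ (Cmod W) (2 * ((x2 - x1) + (y2 - y1)) * / d));
    [apply Cmod_ge_0 | lra | lra |].
  intros n.
  assert (Hn : forall x y, x1 <= x <= x2 -> y1 <= y <= y2 -> holo_at (fun w => Cpow (H w) n) (x, y))
    by (intros; apply holo_at_pow, Hd; assumption).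
  pose proof (rect_cauchy_formula _ x1 x2 y1 y2 a b Ha Hb Hn) as Hcf. fold W in Hcf.
  assert (Hkb : forall x y, x1 <= x <= x2 -> y1 <= y <= y2 -> Cmod (H (x, y)) <= m ->
      (d <= Rabs (x - a) \/ d <= Rabs (y - b)) ->
      Cmod (Cpow (H (x, y)) n * cauchy_kernel (a, b) (x, y))%C <= m ^ n * / d).
  { intros x y hx hy hm hd. rewrite Cmod_mult, Cmod_pow.
    apply Rmult_le_compat; [apply pow_le, Cmod_ge_0 | apply Cmod_ge_0 | |].
    - apply pow_incr. split; [apply Cmod_ge_0 | exact hm].
    - apply Cmod_cauchy_kernel_le; assumption. }
  assert (Hbound : Cmod (rect_integral (fun w => Cpow (H w) n * cauchy_kernel (a, b) w)%C x1 x2 y1 y2)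
      <= 2 * ((x2 - x1) + (y2 - y1)) * (m ^ n * / d)).
  { apply rect_integral_norm_le; [lra | lra | |intros x hx | intros y hy].
    - apply (punctured_boundary_continuous _ x1 x2 y1 y2 a b); try lra.
      intros x y hx hy hne. apply holo_at_mult; [apply Hn; assumption|].
      apply holo_at_cauchy_kernel. intros E. injection E. intros. tauto.
    - destruct (HB1 x hx). split; apply Hkb; try lra; right;
        [rewrite Rabs_left1 | rewrite Rabs_right]; lra.
    - destruct (HB2 y hy). split; apply Hkb; try lra; left;
        [rewrite Rabs_left1 | rewrite Rabs_right]; lra. }
  rewrite Hcf, Cmod_mult, Cmod_pow in Hbound. lra.
Qed.

Definition in_rect (x1 x2 y1 y2 : R) (z : C) : Prop := x1 <= fst z <= x2 /\ y1 <= snd z <= y2.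

Lemma cont_on_at_box D (G : C -> C) z (eps : posreal) : cont_on_at D G z ->
  exists del : posreal, forall w, Rabs (fst w - fst z) < del -> Rabs (snd w - snd z) < del ->
    D w -> Cmod (G w - G z)%C < eps.
Proof.
  intros H.
  assert (He : 0 < eps / 2) by (apply Rdiv_lt_0_compat; [apply cond_pos | lra]).
  assert (HP : locally (G z) (fun u => Cmod (u - G z)%C < eps)).
  { apply locally_C_box. exists (mkposreal _ He). intros u h1 h2. simpl in h1, h2.
    eapply Rle_lt_trans; [apply Cmod_le_abs_fst_snd|]. destruct u, (G z). simpl in *.
    unfold Rminus in *. lra. }
  apply H, locally_C_box in HP as [del Hd]. exists del. exact Hd.
Qed.

Lemma cont_on_at_mult D (G1 G2 : C -> C) z : cont_on_at D G1 z -> cont_on_at D G2 z ->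
  cont_on_at D (fun w => G1 w * G2 w)%C z.
Proof.
  intros H1 H2. apply (filterlim_comp_2 G1 G2 Cmult H1 H2).
  intros P HP. apply locally_C in HP.
  destruct (@filterlim_mult C_AbsRing (G1 z) (G2 z) P HP) as [Q R HQ HR HP'].
  exists Q R; [apply locally_C, HQ | apply locally_C, HR | exact HP'].
Qed.

Lemma cont_on_at_subset (D D' : C -> Prop) (G : C -> C) z : (forall w, D w -> D' w) ->
  cont_on_at D' G z -> cont_on_at D G z.
Proof.
  intros Hs H P HP. specialize (H P HP). unfold filtermap, within in *.
  eapply filter_imp; [|exact H]. intros w Hw hD. apply Hw, Hs, hD.
Qed.

Lemma continuous_cont_on_at D (G : C -> C) z : continuous G z -> cont_on_at D G z.
Proof.
  intros H P HP. specialize (H P HP). unfold filtermap, within in *.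
  eapply filter_imp; [|exact H]. intros w Hw _. exact Hw.
Qed.

Lemma rect_uniformly_continuous (G : C -> C) x1 x2 y1 y2 (eps : posreal) :
  (forall z, in_rect x1 x2 y1 y2 z -> cont_on_at (in_rect x1 x2 y1 y2) G z) ->
  exists d : posreal, forall p p', in_rect x1 x2 y1 y2 p -> in_rect x1 x2 y1 y2 p' ->
    Rabs (fst p - fst p') < d -> Rabs (snd p - snd p') < d -> Cmod (G p - G p')%C < eps.
Proof.
  intros Hc.
  assert (He : 0 < eps / 2) by (apply Rdiv_lt_0_compat; [apply cond_pos | lra]).
  assert (Ex : forall u v : R, exists del : posreal,
     in_rect x1 x2 y1 y2 (u, v) -> forall w, Rabs (fst w - u) < 2 * del -> Rabs (snd w - v) < 2 * del ->
       in_rect x1 x2 y1 y2 w -> Cmod (G w - G (u, v))%C < eps / 2).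
  { intros u v. destruct (classic (in_rect x1 x2 y1 y2 (u, v))) as [h|h].
    - destruct (cont_on_at_box _ _ _ (mkposreal _ He) (Hc _ h)) as [del Hd].
      assert (Hd2 : 0 < del / 2) by (apply Rdiv_lt_0_compat; [apply cond_pos | lra]).
      exists (mkposreal _ Hd2). intros _ w h1 h2 h3. simpl in h1, h2.
      apply Hd; simpl; [lra | lra | exact h3].
    - exists (mkposreal 1 Rlt_0_1). intros h'. contradiction. }
  set (delta := fun u v => proj1_sig (constructive_indefinite_description _ (Ex u v))).
  assert (Hdelta : forall u v, in_rect x1 x2 y1 y2 (u, v) -> forall w, Rabs (fst w - u) < 2 * delta u v ->
     Rabs (snd w - v) < 2 * delta u v -> in_rect x1 x2 y1 y2 w -> Cmod (G w - G (u, v))%C < eps / 2).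
  { intros u v. unfold delta.
    destruct (constructive_indefinite_description _ (Ex u v)) as [dl Hdl]. exact Hdl. }
  destruct (compactness_value_2d x1 x2 y1 y2 delta) as [d Hd].
  exists d. intros [px py] p' [hpx hpy] hp' h1 h2. simpl in h1, h2, hpx, hpy.
  apply NNPP. intros Hneg. apply (Hd px py hpx hpy). intros (u & v & hu & hv & k1 & k2 & k3).
  apply Hneg.
  assert (hq : in_rect x1 x2 y1 y2 (u, v)) by (split; simpl; lra).
  assert (A1 : Cmod (G (px, py) - G (u, v))%C < eps / 2).
  { pose proof (cond_pos (delta u v)).
    apply Hdelta; [exact hq | simpl; lra | simpl; lra | split; simpl; lra]. }
  assert (A2 : Cmod (G p' - G (u, v))%C < eps / 2).
  { apply Hdelta; [exact hq | | | exact hp'].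
    - pose proof (Rabs_triang (fst p' - px) (px - u)). rewrite Rabs_minus_sym in h1.
      replace (fst p' - px + (px - u)) with (fst p' - u) in H by ring. lra.
    - pose proof (Rabs_triang (snd p' - py) (py - v)). rewrite Rabs_minus_sym in h2.
      replace (snd p' - py + (py - v)) with (snd p' - v) in H by ring. lra. }
  replace (G (px, py) - G p')%C with ((G (px, py) - G (u, v)) - (G p' - G (u, v)))%C by ring.
  unfold Cminus at 1. eapply Rle_lt_trans; [apply Cmod_triangle|]. rewrite Cmod_opp. lra.
Qed.

(* Shrinking the rectangle by less than the modulus of uniform continuity moves the
   boundary values by at most [eps]; then the interior version applies. *)
Theorem max_modulus_rect (G : C -> C) x1 x2 y1 y2 m :
  x1 < x2 -> y1 < y2 ->
  (forall z, in_rect x1 x2 y1 y2 z -> cont_on_at (in_rect x1 x2 y1 y2) G z) ->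
  (forall x y, x1 < x < x2 -> y1 < y < y2 -> holo_at G (x, y)) ->
  (forall x, x1 <= x <= x2 -> Cmod (G (x, y1)) <= m /\ Cmod (G (x, y2)) <= m) ->
  (forall y, y1 <= y <= y2 -> Cmod (G (x1, y)) <= m /\ Cmod (G (x2, y)) <= m) ->
  forall a b, x1 <= a <= x2 -> y1 <= b <= y2 -> Cmod (G (a, b)) <= m.
Proof.
  intros Hx Hy Hc Hd HB1 HB2 a b Ha Hb.
  destruct (Req_dec a x1) as [->|E1]; [apply HB2; lra|].
  destruct (Req_dec a x2) as [->|E2]; [apply HB2; lra|].
  destruct (Req_dec b y1) as [->|E3]; [apply HB1; lra|].
  destruct (Req_dec b y2) as [->|E4]; [apply HB1; lra|].
  apply Rnot_lt_le. intros Hlt.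
  set (eps := (Cmod (G (a, b)) - m) / 2).
  assert (Heps : 0 < eps) by (unfold eps; lra).
  destruct (rect_uniformly_continuous G x1 x2 y1 y2 (mkposreal _ Heps) Hc) as [d Hud]. simpl in Hud.
  destruct (exists_margin x1 x2 y1 y2 a b d ltac:(lra) ltac:(lra) (cond_pos d))
    as (del & d0 & d1 & d2 & d3 & d4 & d5).
  assert (Hnear : forall p p' : C, in_rect x1 x2 y1 y2 p -> in_rect x1 x2 y1 y2 p' ->
    Rabs (fst p - fst p') <= del -> Rabs (snd p - snd p') <= del -> Cmod (G p') <= m ->
    Cmod (G p) <= m + eps).
  { intros p p' hp hp' h1 h2 hm.
    assert (Cmod (G p - G p')%C < eps) by (apply Hud; auto; lra).
    replace (G p) with ((G p - G p') + G p')%C by ring.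
    eapply Rle_trans; [apply Cmod_triangle|]. lra. }
  assert (Habs : forall u, Rabs (u - u) <= del) by (intros; rewrite Rminus_eq_0, Rabs_R0; lra).
  assert (Hfin : Cmod (G (a, b)) <= m + eps).
  { apply (max_modulus_rect_holo G (x1 + del) (x2 - del) (y1 + del) (y2 - del)); try lra.
    - intros x y hx hy. apply Hd; lra.
    - intros x hx. split.
      + apply (Hnear (x, y1 + del) (x, y1)); try (split; simpl; lra); simpl;
          [apply Habs | rewrite Rabs_right; lra | apply HB1; lra].
      + apply (Hnear (x, y2 - del) (x, y2)); try (split; simpl; lra); simpl;
          [apply Habs | rewrite Rabs_left1; lra | apply HB1; lra].
    - intros y hy. split.
      + apply (Hnear (x1 + del, y) (x1, y)); try (split; simpl; lra); simpl;
          [rewrite Rabs_right; lra | apply Habs | apply HB2; lra].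
      + apply (Hnear (x2 - del, y) (x2, y)); try (split; simpl; lra); simpl;
          [rewrite Rabs_left1; lra | apply Habs | apply HB2; lra]. }
  unfold eps in Hfin. lra.
Qed.

(** * The complex exponential *)

Lemma exp_sub_1_sub_bounds p : Rabs p <= 1 / 2 -> 0 <= exp p - 1 - p <= 2 * (p * p).
Proof.
  intros Hp. apply Rabs_le_between in Hp.
  pose proof (exp_ineq1_le p). pose proof (exp_ineq1_le (- p)).
  split; [lra|].
  assert (Hle : exp p <= / (1 - p)).
  { rewrite <- (Rinv_inv (exp p)), <- exp_Ropp. apply Rinv_le_contravar; lra. }
  assert (/ (1 - p) <= 1 + p + 2 * (p * p)).
  { apply (Rmult_le_reg_l (1 - p)); [lra|]. rewrite Rinv_r by lra.
    destruct (Rle_dec 0 p); nra. }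
  lra.
Qed.

Lemma Rabs_exp_sub_1_le p : Rabs p <= 1 / 2 -> Rabs (exp p - 1) <= 2 * Rabs p.
Proof.
  intros Hp. pose proof (exp_sub_1_sub_bounds p Hp). apply Rabs_le_between in Hp.
  apply Rabs_le. destruct (Rle_dec 0 p); [rewrite Rabs_right | rewrite Rabs_left]; lra || nra.
Qed.

Lemma sin_bounds_nonneg q : 0 <= q <= 1 / 2 -> q - q * q * q / 6 <= sin q <= q.
Proof.
  intros Hq. destruct (pre_sin_bound q 0 ltac:(lra) ltac:(lra)) as [h1 h2].
  unfold sin_approx, sin_term in h1, h2. simpl in h1, h2.
  split; [replace (q - q * q * q / 6) with (1 * (q * 1 / 1)
    + -1 * 1 * (q * (q * (q * 1)) / (1 + 1 + 1 + 1 + 1 + 1))) by field; exact h1|].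
  eapply Rle_trans; [exact h2|].
  assert (0 <= q * q * q) by (apply Rmult_le_pos; [nra | lra]).
  assert (q * q * q * q * q <= 20 * (q * q * q)) by (assert (q * q <= 1) by nra; nra).
  field_simplify. lra.
Qed.

Lemma sin_bounds q : Rabs q <= 1 / 2 -> Rabs (sin q) <= Rabs q /\ Rabs (sin q - q) <= q * q.
Proof.
  intros Hq. apply Rabs_le_between in Hq.
  destruct (Rle_dec 0 q).
  - destruct (sin_bounds_nonneg q ltac:(lra)).
    assert (0 <= q * q * q) by (apply Rmult_le_pos; [nra | lra]).
    split; apply Rabs_le; rewrite ?Rabs_right by lra; split; nra.
  - destruct (sin_bounds_nonneg (- q) ltac:(lra)). rewrite sin_neg in *.
    assert (0 <= (- q) * (- q) * (- q)) by (apply Rmult_le_pos; [nra | lra]).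
    split; apply Rabs_le; rewrite ?Rabs_left by lra; split; nra.
Qed.

Lemma cos_sub_1_bounds q : Rabs q <= 1 / 2 -> - (q * q / 2) <= cos q - 1 <= 0.
Proof.
  intros Hq. apply Rabs_le_between in Hq.
  destruct (pre_cos_bound q 0 ltac:(lra) ltac:(lra)) as [h1 h2].
  unfold cos_approx, cos_term in h1, h2. simpl in h1, h2.
  assert (q * q <= 1) by nra.
  split; [field_simplify in h1; lra|]. field_simplify in h2. nra.
Qed.

Definition cexp (w : C) : C := (exp (fst w) * cos (snd w), exp (fst w) * sin (snd w)).

Lemma Cmod_cexp w : Cmod (cexp w) = exp (fst w).
Proof.
  unfold Cmod, cexp; simpl.
  replace (exp (fst w) * cos (snd w) * (exp (fst w) * cos (snd w) * 1) +
           exp (fst w) * sin (snd w) * (exp (fst w) * sin (snd w) * 1))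
    with (exp (fst w) * exp (fst w) * ((sin (snd w))² + (cos (snd w))²)) by (unfold Rsqr; ring).
  rewrite sin2_cos2, Rmult_1_r, sqrt_square; [reflexivity | left; apply exp_pos].
Qed.

Lemma cexp_plus w h : cexp (w + h)%C = (cexp w * cexp h)%C.
Proof. unfold cexp, Cplus, Cmult; simpl. rewrite exp_plus, cos_plus, sin_plus. f_equal; ring. Qed.

Lemma cexp_neq0 w : cexp w <> 0%C.
Proof.
  intros E. pose proof (Cmod_cexp w) as H. rewrite E, Cmod_0 in H. pose proof (exp_pos (fst w)). lra.
Qed.

Lemma has_arg_cexp x y : has_arg (cexp (x, y)) y.
Proof. unfold has_arg. rewrite Cmod_cexp. reflexivity. Qed.

Lemma Cmod_cexp_sub_1_sub_le p q : Rabs p <= 1 / 2 -> Rabs q <= 1 / 2 ->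
  Cmod (cexp (p, q) - 1 - (p, q))%C <= 3 * (p * p + q * q).
Proof.
  intros Hp Hq.
  destruct (exp_sub_1_sub_bounds p Hp) as [e1 e2]. pose proof (Rabs_exp_sub_1_le p Hp) as e3.
  destruct (sin_bounds q Hq) as [s1 s2]. destruct (cos_sub_1_bounds q Hq) as [c1 c2].
  pose proof (COS_bound q) as cb. pose proof (exp_pos p).
  eapply Rle_trans; [apply Cmod_le_abs_fst_snd|]. unfold cexp, Cminus, Cplus, Copp, RtoC; simpl.
  set (E := exp p - 1 - p) in *. set (S := sin q - q) in *. set (Cc := cos q - 1) in *.
  replace (exp p * cos q + - (1) + - p) with (E * cos q + (1 + p) * Cc) by (unfold E, Cc; ring).
  replace (exp p * sin q + - 0 + - q) with ((exp p - 1) * sin q + S) by (unfold S; ring).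
  pose proof (Rabs_pos p). pose proof (Rabs_pos q).
  assert (B1 : Rabs (E * cos q + (1 + p) * Cc) <= 2 * (p * p) + q * q).
  { eapply Rle_trans; [apply Rabs_triang|]. rewrite !Rabs_mult.
    assert (Rabs (cos q) <= 1) by (apply Rabs_le; lra).
    assert (Rabs E <= 2 * (p * p)) by (apply Rabs_le; lra).
    assert (Rabs (1 + p) <= 3 / 2) by (apply Rabs_le; apply Rabs_le_between in Hp; lra).
    assert (Rabs Cc <= q * q / 2) by (apply Rabs_le; lra).
    pose proof (Rabs_pos E). pose proof (Rabs_pos (cos q)). pose proof (Rabs_pos (1 + p)).
    pose proof (Rabs_pos Cc). nra. }
  assert (B2 : Rabs ((exp p - 1) * sin q + S) <= p * p + 2 * (q * q)).
  { eapply Rle_trans; [apply Rabs_triang|]. rewrite Rabs_mult.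
    pose proof (Rabs_pos (exp p - 1)). pose proof (Rabs_pos (sin q)).
    assert (Rabs (exp p - 1) * Rabs (sin q) <= 2 * Rabs p * Rabs q) by (apply Rmult_le_compat; lra).
    assert (2 * Rabs p * Rabs q <= p * p + q * q).
    { assert (Rabs p * Rabs p = p * p) by (rewrite <- Rabs_mult; apply Rabs_right; nra).
      assert (Rabs q * Rabs q = q * q) by (rewrite <- Rabs_mult; apply Rabs_right; nra).
      pose proof (Rle_0_sqr (Rabs p - Rabs q)). unfold Rsqr in *. nra. }
    lra. }
  lra.
Qed.

Lemma holo_at_cexp w : holo_at cexp w.
Proof.
  exists (cexp w).
  apply (is_derive_C_of_quadratic_error _ _ _ (3 * exp (fst w)) (1 / 2)); [lra|].
  intros v Hv.
  set (h := (v - w)%C) in *.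
  replace v with (w + h)%C by (unfold h; ring).
  rewrite cexp_plus.
  replace (cexp w * cexp h - cexp w - h * cexp w)%C with (cexp w * (cexp h - 1 - h))%C by ring.
  rewrite Cmod_mult, Cmod_cexp.
  destruct h as [p q].
  pose proof (Rmax_Cmod (p, q)).
  pose proof (Rmax_l (Rabs p) (Rabs q)). pose proof (Rmax_r (Rabs p) (Rabs q)).
  simpl in *.
  assert (Eh : Cmod (p, q) * Cmod (p, q) = p * p + q * q)
    by (unfold Cmod; simpl; rewrite sqrt_sqrt by nra; ring).
  rewrite Eh. pose proof (exp_pos (fst w)).
  pose proof (Cmod_cexp_sub_1_sub_le p q ltac:(lra) ltac:(lra)). nra.
Qed.

(** * Phragmen-Lindelof on a strip and on a sector *)

Lemma cont_on_at_comp (D D' : C -> Prop) (f h : C -> C) w : continuous h w ->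
  (forall u, D' u -> D (h u)) -> cont_on_at D f (h w) -> cont_on_at D' (fun u => f (h u)) w.
Proof.
  intros Hh HD Hf. eapply filterlim_comp; [|exact Hf].
  intros P HP. specialize (Hh _ HP). unfold filtermap, within in *.
  eapply filter_imp; [|exact Hh]. intros u Hu Hu'. apply Hu, HD, Hu'.
Qed.

Lemma Cmod_le_of_cont_on_at D (G : C -> C) w M : cont_on_at D G w ->
  (forall del, 0 < del -> exists w', D w' /\ Rabs (fst w' - fst w) < del /\
     Rabs (snd w' - snd w) < del /\ Cmod (G w') <= M) ->
  Cmod (G w) <= M.
Proof.
  intros Hc Happ. apply Rnot_lt_le. intros Hlt.
  assert (Heps : 0 < (Cmod (G w) - M) / 2) by lra.
  destruct (cont_on_at_box D G w (mkposreal _ Heps) Hc) as [del Hd]. simpl in Hd.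
  destruct (Happ del (cond_pos del)) as (w' & hD & h1 & h2 & hM).
  specialize (Hd w' h1 h2 hD).
  pose proof (Cmod_triangle (G w') (G w - G w')%C).
  replace (G w' + (G w - G w'))%C with (G w) in H by ring.
  rewrite <- Cmod_opp in Hd. replace (- (G w' - G w))%C with (G w - G w')%C in Hd by ring. lra.
Qed.

Lemma exp_le x y : x <= y -> exp x <= exp y.
Proof. intros [H|H]; [left; apply exp_increasing, H | rewrite H; right; reflexivity]. Qed.

Lemma le_of_le_mult_exp_eps a A Z : 0 <= Z -> 0 < A ->
  (forall eps, 0 < eps -> a <= A * exp (eps * Z)) -> a <= A.
Proof.
  intros HZ HA H. apply Rnot_lt_le. intros Hlt.
  set (l := ln (a / A)).
  assert (Hl : 0 < l).
  { unfold l. rewrite <- ln_1. apply ln_increasing; [lra|].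
    apply (Rmult_lt_reg_r A); [exact HA|]. unfold Rdiv. rewrite Rmult_assoc, Rinv_l by lra. lra. }
  set (eps := l / (2 * (Z + 1))).
  assert (He : 0 < eps) by (unfold eps; apply Rdiv_lt_0_compat; lra).
  specialize (H eps He).
  assert (H2 : eps * Z < l).
  { unfold eps. apply (Rmult_lt_reg_r (2 * (Z + 1))); [lra|].
    replace (l / (2 * (Z + 1)) * Z * (2 * (Z + 1))) with (l * Z) by (field; lra). nra. }
  apply exp_increasing in H2. unfold l in H2. rewrite exp_ln in H2 by (apply Rdiv_lt_0_compat; lra).
  apply (Rmult_lt_compat_l A) in H2; [|lra]. replace (A * (a / A)) with a in H2 by (field; lra). lra.
Qed.

Lemma exists_large_side c lam eps x0 : 0 < eps -> 0 < lam ->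
  exists X, Rabs x0 < X /\ c + lam * X <= eps * (X * X).
Proof.
  intros He Hl.
  set (X := (Rabs c + lam + 1) / eps + Rabs x0 + 1).
  pose proof (Rabs_pos c). pose proof (Rabs_pos x0). pose proof (Rle_abs c).
  assert (0 <= (Rabs c + lam + 1) / eps) by (apply Rdiv_le_0_compat; lra).
  assert (HX : 1 <= X) by (unfold X; lra).
  assert (HeX : Rabs c + lam + 1 <= eps * X).
  { unfold X. replace (eps * ((Rabs c + lam + 1) / eps + Rabs x0 + 1))
      with (Rabs c + lam + 1 + eps * (Rabs x0 + 1)) by (field; lra). nra. }
  exists X. split; [unfold X; lra|].
  assert ((Rabs c + lam + 1) * X <= eps * X * X) by (apply Rmult_le_compat_r; lra).
  nra.
Qed.

(* The exponent Q_eps of the proof idea, with Kl = ln K and D = beta - alpha. *)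
Definition pl_exponent (Kl L lam beta D eps : R) (w : C) : C :=
  (RtoC (- Kl) - RtoC (L / D) * (RtoC beta + Ci * w)
   + RtoC (lam / D) * (RtoC beta * w + Ci * w * w * RtoC (/ 2)) - RtoC eps * w * w)%C.

Lemma pl_exponent_re Kl L lam beta D eps x y : D <> 0 ->
  fst (pl_exponent Kl L lam beta D eps (x, y)) =
  - ((beta - y) / D * (L - lam * x) + Kl) - eps * (x * x - y * y).
Proof. intros HD. unfold pl_exponent, RtoC, Ci, Cminus, Cplus, Cmult, Copp; simpl. field. exact HD. Qed.

Lemma holo_at_pl_exponent Kl L lam beta D eps w : holo_at (pl_exponent Kl L lam beta D eps) w.
Proof.
  unfold pl_exponent.
  apply holo_at_minus; [apply holo_at_plus; [apply holo_at_minus|] | ].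
  - apply holo_at_const.
  - apply holo_at_mult; [apply holo_at_const|].
    apply holo_at_plus; [apply holo_at_const|].
    apply holo_at_mult; [apply holo_at_const | apply holo_at_id].
  - apply holo_at_mult; [apply holo_at_const|]. apply holo_at_plus.
    + apply holo_at_mult; [apply holo_at_const | apply holo_at_id].
    + apply holo_at_mult; [|apply holo_at_const].
      apply holo_at_mult; [apply holo_at_mult; [apply holo_at_const|] |]; apply holo_at_id.
  - apply holo_at_mult; [apply holo_at_mult; [apply holo_at_const|] |]; apply holo_at_id.
Qed.

Definition strip (alpha beta : R) (w : C) : Prop := alpha <= snd w <= beta.

Section PhragmenLindelofStrip.

Variables (g : C -> C) (alpha beta M L lambda : R).
Hypotheses (Hab : alpha < beta) (HM : 0 < M) (Hlam : 0 < lambda).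
Hypothesis Hholo : forall x y, alpha < y < beta -> holo_at g (x, y).
Hypothesis Hcont : forall w, strip alpha beta w -> cont_on_at (strip alpha beta) g w.
Hypothesis Hbound : forall x y, alpha <= y <= beta -> Cmod (g (x, y)) <= M.
Hypothesis Hedge : forall x, Cmod (g (x, alpha)) <= exp (L - lambda * x).

Let Kl := ln (Rmax 1 M).
Let D := beta - alpha.
Let Y := alpha * alpha + beta * beta.
Let weighted (eps : R) (w : C) : C := (g w * cexp (pl_exponent Kl L lambda beta D eps w))%C.

Lemma Kl_nonneg : 0 <= Kl.
Proof. unfold Kl. rewrite <- ln_1. apply ln_le; [lra | apply Rmax_l]. Qed.

Lemma Cmod_weighted eps x y : Cmod (weighted eps (x, y)) =
  Cmod (g (x, y)) * exp (- ((beta - y) / D * (L - lambda * x) + Kl) - eps * (x * x - y * y)).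
Proof. unfold weighted. rewrite Cmod_mult, Cmod_cexp, pl_exponent_re by (unfold D; lra). reflexivity. Qed.

Lemma weighted_bottom_le eps x : 0 < eps -> Cmod (weighted eps (x, alpha)) <= exp (eps * Y).
Proof.
  intros He. rewrite Cmod_weighted.
  replace ((beta - alpha) / D) with 1 by (unfold D; field; lra).
  eapply Rle_trans; [apply Rmult_le_compat_r; [left; apply exp_pos | apply Hedge]|].
  rewrite <- exp_plus. apply exp_le. pose proof Kl_nonneg. unfold Y. nra.
Qed.

Lemma weighted_top_le eps x : 0 < eps -> Cmod (weighted eps (x, beta)) <= exp (eps * Y).
Proof.
  intros He. rewrite Cmod_weighted.
  replace ((beta - beta) / D) with 0 by (unfold D; field; lra).
  assert (HK : Cmod (g (x, beta)) <= exp Kl).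
  { unfold Kl. rewrite exp_ln by (pose proof (Rmax_l 1 M); lra).
    eapply Rle_trans; [apply Hbound; lra | apply Rmax_r]. }
  eapply Rle_trans; [apply Rmult_le_compat_r; [left; apply exp_pos | exact HK]|].
  rewrite <- exp_plus. apply exp_le. unfold Y. nra.
Qed.

Lemma weighted_side_le eps x y : 0 < eps -> alpha <= y <= beta ->
  ln M + Rabs L + lambda * Rabs x <= eps * (x * x) -> Cmod (weighted eps (x, y)) <= exp (eps * Y).
Proof.
  intros He Hy Hx. rewrite Cmod_weighted.
  assert (Ht : 0 <= (beta - y) / D <= 1).
  { unfold D. split; [apply Rdiv_le_0_compat; lra|].
    apply (Rmult_le_reg_r (beta - alpha)); [lra|]. unfold Rdiv. rewrite Rmult_assoc, Rinv_l by lra. lra. }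
  assert (Hlin : - ((beta - y) / D * (L - lambda * x)) <= Rabs L + lambda * Rabs x).
  { set (t := (beta - y) / D) in *.
    pose proof (Rabs_maj2 L). pose proof (Rle_abs x). pose proof (Rabs_pos L). pose proof (Rabs_pos x).
    assert (t * (- L) <= t * Rabs L) by (apply Rmult_le_compat_l; lra).
    assert (t * Rabs L <= Rabs L) by nra.
    assert (t * (lambda * x) <= t * (lambda * Rabs x))
      by (apply Rmult_le_compat_l; [lra | apply Rmult_le_compat_l; lra]).
    assert (0 <= lambda * Rabs x) by (apply Rmult_le_pos; lra).
    assert (t * (lambda * Rabs x) <= lambda * Rabs x) by nra.
    lra. }
  eapply Rle_trans; [apply Rmult_le_compat_r; [left; apply exp_pos | apply Hbound, Hy]|].
  rewrite <- (exp_ln M) at 1 by exact HM. rewrite <- exp_plus. apply exp_le.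
  assert (y * y <= Y) by (unfold Y; destruct (Rle_dec 0 y); nra).
  pose proof Kl_nonneg. nra.
Qed.

Lemma weighted_le eps x y : 0 < eps -> alpha <= y <= beta ->
  Cmod (weighted eps (x, y)) <= exp (eps * Y).
Proof.
  intros He Hy.
  destruct (exists_large_side (ln M + Rabs L) lambda eps x He Hlam) as (X & HxX & HX).
  assert (Hside : forall x', Rabs x' = X -> forall y', alpha <= y' <= beta ->
    Cmod (weighted eps (x', y')) <= exp (eps * Y)).
  { intros x' Hx' y' Hy'. apply weighted_side_le; [exact He | exact Hy'|].
    assert (Hsq : x' * x' = X * X) by (rewrite <- Hx', <- Rabs_mult, Rabs_right; nra).
    rewrite Hx', Hsq. exact HX. }
  pose proof (Rabs_pos x).
  apply (max_modulus_rect (weighted eps) (- X) X alpha beta); try lra.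
  - intros w [_ hw]. apply cont_on_at_mult.
    + apply (cont_on_at_subset _ (strip alpha beta)); [intros u [_ hu]; exact hu | apply Hcont, hw].
    + apply continuous_cont_on_at, holo_at_continuous, (holo_at_comp cexp);
        [apply holo_at_cexp | apply holo_at_pl_exponent].
  - intros x' y' _ hy. apply holo_at_mult; [apply Hholo; lra|].
    apply (holo_at_comp cexp); [apply holo_at_cexp | apply holo_at_pl_exponent].
  - intros x' _. split; [apply weighted_bottom_le | apply weighted_top_le]; exact He.
  - intros y' hy'. split; apply Hside; try assumption;
      [rewrite Rabs_Ropp|]; apply Rabs_right; lra.
  - apply Rabs_le_between. lra.
Qed.

Theorem phragmen_lindelof_strip x y : alpha <= y <= beta ->
  Cmod (g (x, y)) <= Rmax 1 M * exp ((beta - y) / (beta - alpha) * (L - lambda * x)).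
Proof.
  intros Hy.
  assert (HK : Rmax 1 M = exp Kl)
    by (unfold Kl; rewrite exp_ln; [reflexivity | pose proof (Rmax_l 1 M); lra]).
  rewrite HK, <- exp_plus. fold D.
  apply (le_of_le_mult_exp_eps _ _ (Y + x * x)); [unfold Y; nra | apply exp_pos|].
  intros eps He.
  pose proof (weighted_le eps x y He Hy) as Hw. rewrite Cmod_weighted in Hw.
  set (R0 := - ((beta - y) / D * (L - lambda * x) + Kl) - eps * (x * x - y * y)) in Hw.
  assert (Hg : Cmod (g (x, y)) <= exp (eps * Y) * exp (- R0)).
  { apply (Rmult_le_reg_r (exp R0)); [apply exp_pos|].
    rewrite Rmult_assoc, <- exp_plus, Rplus_opp_l, exp_0, Rmult_1_r. exact Hw. }
  eapply Rle_trans; [exact Hg|]. rewrite <- !exp_plus. apply exp_le. unfold R0. nra.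
Qed.

End PhragmenLindelofStrip.

Lemma exists_open_interval_near alpha beta y del : alpha < beta -> alpha <= y <= beta -> 0 < del ->
  exists y', alpha < y' < beta /\ Rabs (y' - y) < del.
Proof.
  intros Hab Hy Hdel.
  set (s := Rmin (del / 2) ((beta - alpha) / 2)).
  assert (Hs : 0 < s /\ s < del /\ s < beta - alpha).
  { pose proof (Rmin_l (del / 2) ((beta - alpha) / 2)).
    pose proof (Rmin_r (del / 2) ((beta - alpha) / 2)).
    assert (0 < s) by (apply Rmin_pos; lra). fold s in H, H0. lra. }
  destruct (Rlt_dec y beta) as [h|h]; [destruct (Rlt_dec alpha y) as [h'|h']|].
  - exists y. rewrite Rminus_eq_0, Rabs_R0. lra.
  - exists (y + s). rewrite Rabs_right by lra. lra.
  - exists (y - s). rewrite Rabs_left1 by lra. lra.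
Qed.


Lemma strip_closed_bound (g : C -> C) alpha beta M : alpha < beta ->
  (forall w, strip alpha beta w -> cont_on_at (strip alpha beta) g w) ->
  (forall x y, alpha < y < beta -> Cmod (g (x, y)) <= M) ->
  forall x y, alpha <= y <= beta -> Cmod (g (x, y)) <= M.
Proof.
  intros Hab Hcont Hopen x y hy.
  apply (Cmod_le_of_cont_on_at (strip alpha beta)); [apply Hcont, hy|]. intros del hdel.
  destruct (exists_open_interval_near alpha beta y del Hab hy hdel) as (y' & hy' & hd).
  exists (x, y'). split; [unfold strip; simpl; lra|]. simpl. rewrite Rminus_eq_0, Rabs_R0.
  split; [exact hdel|]. split; [exact hd|]. apply Hopen, hy'.
Qed.

Lemma sector_cexp alpha beta x y : alpha < y < beta -> sector alpha beta (cexp (x, y)).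
Proof. intros hy. split; [apply cexp_neq0 | exists y; split; [exact hy | apply has_arg_cexp]]. Qed.

Lemma sector_closure_cexp alpha beta w : strip alpha beta w -> sector_closure alpha beta (cexp w).
Proof. destruct w as [x y]. intros hy. right. exists y. split; [exact hy | apply has_arg_cexp]. Qed.

Lemma cexp_ln_Cmod (z : C) theta : z <> 0%C -> has_arg z theta -> cexp (ln (Cmod z), theta) = z.
Proof.
  intros Hz Harg. unfold cexp; simpl. rewrite exp_ln by (apply Cmod_gt_0, Hz). symmetry. exact Harg.
Qed.

Lemma div_Rpower_eq_exp c r lam : 0 < c -> c / Rpower r lam = exp (ln c - lam * ln r).
Proof.
  intros Hc. unfold Rpower. rewrite Rminus_def, exp_plus, exp_ln, exp_Ropp by exact Hc. reflexivity.
Qed.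

Theorem lemma5p1 (alpha beta : R) (f : C -> C) (M Cc lambda : R) :
  alpha < beta ->
  (forall z, sector alpha beta z -> holo_at f z) ->
  (forall z, sector_closure alpha beta z ->
     cont_on_at (sector_closure alpha beta) f z) ->
  0 < M -> 0 < Cc -> 0 < lambda ->
  (forall z, sector alpha beta z -> Cmod (f z) <= M) ->
  (forall z : C, z <> 0%C -> has_arg z alpha ->
     Cmod (f z) <= Cc / Rpower (Cmod z) lambda) ->
  forall (z : C) (theta : R), z <> 0%C -> alpha <= theta <= beta ->
    has_arg z theta ->
    Cmod (f z) <= Rmax 1 M *
      Rpower (Cc / Rpower (Cmod z) lambda) ((beta - theta) / (beta - alpha)).
Proof.
  intros Hab Hholo Hcont HM HC Hlam Hbound Hray z theta Hz Hth Harg.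
  set (g := fun w => f (cexp w)).
  assert (g_holo : forall x y, alpha < y < beta -> holo_at g (x, y))
    by (intros x y hy; apply (holo_at_comp f cexp);
        [apply Hholo, sector_cexp, hy | apply holo_at_cexp]).
  assert (g_cont : forall w, strip alpha beta w -> cont_on_at (strip alpha beta) g w)
    by (intros w hw; apply (cont_on_at_comp (sector_closure alpha beta) _ f cexp);
        [apply holo_at_continuous, holo_at_cexp | apply sector_closure_cexp
        | apply Hcont, sector_closure_cexp, hw]).
  assert (g_bound : forall x y, alpha <= y <= beta -> Cmod (g (x, y)) <= M)
    by (apply strip_closed_bound; [exact Hab | exact g_cont |];
        intros x y hy; apply Hbound, sector_cexp, hy).
  assert (g_edge : forall x, Cmod (g (x, alpha)) <= exp (ln Cc - lambda * x)).
  { intros x. pose proof (Hray (cexp (x, alpha)) (cexp_neq0 _) (has_arg_cexp x alpha)) as H.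
    rewrite Cmod_cexp, div_Rpower_eq_exp, ln_exp in H by exact HC. exact H. }
  pose proof (phragmen_lindelof_strip g alpha beta M (ln Cc) lambda Hab HM Hlam
    g_holo g_cont g_bound g_edge (ln (Cmod z)) theta Hth) as Hpl.
  unfold g in Hpl. rewrite cexp_ln_Cmod in Hpl by assumption.
  rewrite div_Rpower_eq_exp by exact HC. unfold Rpower at 1. rewrite ln_exp. exact Hpl.
Qed.
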